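(* Consider the setting and Algorithm DRDGA described in the context, under Assumptions A1 and A2, with stepsize $\beta[t]=q/t$ for $t=1,2,\dots$, where the constant $q>0$ satisfies $q\gamma/m\ge 4$, $\gamma:=\sum_{j=1}^m\gamma_j$. Let $D$ be a constant with $\sup_t\|\lambda_i[t]\|\le D$ for all $i$ (which exists by Theorem 1), let $B:=\max_{1\le i\le m}\sqrt{p}\,(G_i+\gamma_iD)$, and let $\delta$, $\eta$ be as in the context. Then for all $T\ge 2$, $$F(\widehat{\mathbf{x}}[T])-F(\mathbf{x}^* )\le \frac{32}{T\delta}\sum_{i=1}^m(G_i+\gamma_iD)\left(\frac{\eta}{1-\eta}\sum_{i=1}^m\|\theta_i[0]\|_1+\frac{qmB}{1-\eta}(1+\ln T)\right)+\frac{q}{T}\sum_{i=1}^m(G_i+\gamma_iD)^2,$$ where $\mathbf{x}^*$ is an optimal solution of the problem.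
   Context: Problem: $m$ agents; agent $i$ has a function $f_i:\mathbb{R}^{n_i}\to\mathbb{R}$, a set $\mathbf{X}_i\subseteq\mathbb{R}^{n_i}$, a matrix $A_i\in\mathbb{R}^{p\times n_i}$ and a vector $\mathbf{b}_i\in\mathbb{R}^p$. The problem is $\min_{\mathbf{x}_i\in\mathbf{X}_i,\,i=1,\dots,m} F(\mathbf{x}):=\sum_{i=1}^m f_i(\mathbf{x}_i)$ subject to $\sum_{i=1}^m (A_i\mathbf{x}_i-\mathbf{b}_i)=0$, where $\mathbf{x}=(\mathbf{x}_1,\dots,\mathbf{x}_m)$. Regularization parameters $\gamma_i>0$ are fixed; $\mathcal{L}_i(\mathbf{x}_i,\lambda)=f_i(\mathbf{x}_i)+\lambda^\top(A_i\mathbf{x}_i-\mathbf{b}_i)-\frac{\gamma_i}{2}\lambda^\top\lambda$ for $\lambda\in\mathbb{R}^p$. Assumption A1: each $f_i$ is $\tau_i$-strongly convex ($\tau_i>0$), and each $\mathbf{X}_i$ is nonempty, convex and compact. $G_i>0$ denote constants with $\|A_i\mathbf{x}_i-\mathbf{b}_i\|\le G_i$ for all $\mathbf{x}_i\in\mathbf{X}_i$. Network: a sequence of directed graphs $\mathcal{G}[t]=(\{1,\dots,m\},\mathcal{E}[t])$. Out-neighbors $\mathcal{N}_i^{out}[t]=\{j:(i,j)\in\mathcal{E}[t]\}\cup\{i\}$, in-neighbors $\mathcal{N}_i^{in}[t]=\{j:(j,i)\in\mathcal{E}[t]\}\cup\{i\}$, out-degree $d_i[t]=|\mathcal{N}_i^{out}[t]|$.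 Weight matrix $W[t]$: $(W[t])_{ij}=1/d_j[t]$ if $j\in\mathcal{N}_i^{in}[t]$ and $0$ otherwise (column stochastic). Assumption A2: each agent $i$ knows $d_i[t]$ for every $t$, and there is an integer $B_c>0$ such that for every $k\ge0$ the graph with edge set $\bigcup_{l=kB_c}^{(k+1)B_c-1}\mathcal{E}[l]$ is strongly connected. Constants: $\delta:=\inf_{t\ge0}\min_{1\le i\le m}(W[t]W[t-1]\cdots W[0]\mathbf{1})_i$, which satisfies $\delta\ge 1/m^{mB_c}$; and $\eta:=(1-1/m^{mB_c})^{1/(mB_c)}\in(0,1)$. Algorithm DRDGA: initialize $\theta_i[0]\in\mathbb{R}^p$ and $\rho_i[0]=1$. For $t=0,1,\dots$ and each $i$: $\mathbf{u}_i[t+1]=\sum_j (W[t])_{ij}\theta_j[t]$; $\rho_i[t+1]=\sum_j (W[t])_{ij}\rho_j[t]$; $\lambda_i[t+1]=\mathbf{u}_i[t+1]/\rho_i[t+1]$; $\mathbf{x}_i[t+1]=\arg\min_{\mathbf{x}_i\in\mathbf{X}_i}\mathcal{L}_i(\mathbf{x}_i,\lambda_i[t+1])$; $\theta_i[t+1]=\mathbf{u}_i[t+1]+\beta[t+1](A_i\mathbf{x}_i[t+1]-\mathbf{b}_i-\gamma_i\lambda_i[t+1])$. Averaged primal iterates: for $T\ge2$, $\widehat{\mathbf{x}}_i[T]=\frac{\sum_{t=1}^T (t-1)\mathbf{x}_i[t]}{T(T-1)/2}$, and $\widehat{\mathbf{x}}[T]=(\widehat{\mathbf{x}}_1[T],\dots,\widehat{\mathbf{x}}_m[T])$.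 $\|\cdot\|_1$ is the $\ell_1$ norm. *)

From Stdlib Require Import Reals Lra Relations.
Open Scope R_scope.

(* Vectors of R^n are represented as functions nat -> R; only the first n
   coordinates are meaningful. *)
Definition vec := nat -> R.

Fixpoint rsum (n : nat) (f : nat -> R) : R :=
  match n with O => 0 | S k => rsum k f + f k end.

Fixpoint rmax_upto (n : nat) (f : nat -> R) : R :=
  match n with O => f O | S k => Rmax (rmax_upto k f) (f (S k)) end.

Fixpoint countb (n : nat) (P : nat -> bool) : nat :=
  match n with O => O | S k => (countb k P + (if P k then 1 else 0))%nat end.

Definition norm2 (n : nat) (v : vec) : R := sqrt (rsum n (fun k => v k ^ 2)).
Definition norm1 (n : nat) (v : vec) : R := rsum n (fun k => Rabs (v k)).

Definition vsub (u v : vec) : vec := fun k => u k - v k.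
Definition vcomb (a : R) (u v : vec) : vec := fun k => a * u k + (1 - a) * v k.

Definition supported (n : nat) (x : vec) : Prop := forall k, (n <= k)%nat -> x k = 0.

Definition matvec (n : nat) (A : nat -> nat -> R) (x : vec) : vec :=
  fun k => rsum n (fun l => A k l * x l).

Definition strongly_convex (n : nat) (f : vec -> R) (tau : R) : Prop :=
  forall x y a, supported n x -> supported n y -> 0 <= a <= 1 ->
    f (vcomb a x y) <= a * f x + (1 - a) * f y
                       - tau / 2 * a * (1 - a) * (norm2 n (vsub x y)) ^ 2.

Definition subset_Rn (n : nat) (X : vec -> Prop) : Prop :=
  forall x, X x -> supported n x.
Definition nonempty (X : vec -> Prop) : Prop := exists x, X x.
Definition convex_set (X : vec -> Prop) : Prop :=
  forall x y a, X x -> X y -> 0 <= a <= 1 -> X (vcomb a x y).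
Definition closed_set (X : vec -> Prop) : Prop :=
  forall (s : nat -> vec) (y : vec), (forall j, X (s j)) ->
    (forall k, Un_cv (fun j => s j k) (y k)) -> X y.
Definition bounded_set (n : nat) (X : vec -> Prop) : Prop :=
  exists M, forall x, X x -> norm2 n x <= M.
Definition compact_set (n : nat) (X : vec -> Prop) : Prop :=
  closed_set X /\ bounded_set n X.

Definition lagr (p n : nat) (f : vec -> R) (A : nat -> nat -> R) (b : vec)
  (gam : R) (x lam : vec) : R :=
  f x + rsum p (fun k => lam k * (matvec n A x k - b k))
      - gam / 2 * rsum p (fun k => lam k ^ 2).

(* ---- Network ---- E t i j = true iff (i,j) is in E[t] *)
Definition in_out (E : nat -> nat -> nat -> bool) (t i j : nat) : bool :=
  (Nat.eqb j i || E t i j)%bool.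

Definition outdeg (m : nat) (E : nat -> nat -> nat -> bool) (t i : nat) : R :=
  INR (countb m (in_out E t i)).

Definition Wt (m : nat) (E : nat -> nat -> nat -> bool) (t i j : nat) : R :=
  if (Nat.eqb j i || E t j i)%bool then / outdeg m E t j else 0.

Fixpoint Wprod (m : nat) (E : nat -> nat -> nat -> bool) (t i : nat) : R :=
  match t with
  | O => rsum m (fun j => Wt m E O i j)
  | S s => rsum m (fun j => Wt m E (S s) i j * Wprod m E s j)
  end.

Definition union_edge (m Bc : nat) (E : nat -> nat -> nat -> bool) (k : nat)
  (i j : nat) : Prop :=
  (i < m)%nat /\ (j < m)%nat /\
  exists l, (k * Bc <= l < (k + 1) * Bc)%nat /\ E l i j = true.

Definition strongly_connected_union (m Bc : nat) (E : nat -> nat -> nat -> bool)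
  (k : nat) : Prop :=
  forall i j, (i < m)%nat -> (j < m)%nat ->
    clos_refl_trans nat (union_edge m Bc E k) i j.

(* Assumption A2 (the informational part "agent i knows d_i[t]" is not
   mathematical content) *)
Definition assumption_A2 (m Bc : nat) (E : nat -> nat -> nat -> bool) : Prop :=
  (0 < Bc)%nat /\ forall k, strongly_connected_union m Bc E k.

Definition is_inf (P : R -> Prop) (d : R) : Prop :=
  (forall x, P x -> d <= x) /\ (forall l, (forall x, P x -> l <= x) -> l <= d).

Definition is_delta (m : nat) (E : nat -> nat -> nat -> bool) (d : R) : Prop :=
  is_inf (fun v => exists t i, (i < m)%nat /\ v = Wprod m E t i) d.

(* real k-th root of x >= 0 (with 0^(1/k) = 0) *)
Definition rroot (x : R) (k : nat) : R :=
  if Rlt_dec 0 x then Rpower x (/ INR k) else 0.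

Definition eta (m Bc : nat) : R :=
  rroot (1 - / (INR m ^ (m * Bc))) (m * Bc).

Definition DRDGA_run (m p : nat) (n : nat -> nat) (f : nat -> vec -> R)
  (X : nat -> vec -> Prop) (A : nat -> nat -> nat -> R) (b : nat -> vec)
  (gam : nat -> R) (E : nat -> nat -> nat -> bool) (beta : nat -> R)
  (theta u lam : nat -> nat -> vec) (rho : nat -> nat -> R)
  (x : nat -> nat -> vec) : Prop :=
  forall i, (i < m)%nat ->
    rho i O = 1 /\
    forall t,
      (forall k, u i (S t) k = rsum m (fun j => Wt m E t i j * theta j t k)) /\
      rho i (S t) = rsum m (fun j => Wt m E t i j * rho j t) /\
      (forall k, lam i (S t) k = u i (S t) k / rho i (S t)) /\
      (X i (x i (S t)) /\
       forall z, X i z ->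
         lagr p (n i) (f i) (A i) (b i) (gam i) (x i (S t)) (lam i (S t))
         <= lagr p (n i) (f i) (A i) (b i) (gam i) z (lam i (S t))) /\
      (forall k, theta i (S t) k =
         u i (S t) k + beta (S t) *
           (matvec (n i) (A i) (x i (S t)) k - b i k - gam i * lam i (S t) k)).

Definition Fobj (m : nat) (f : nat -> vec -> R) (x : nat -> vec) : R :=
  rsum m (fun i => f i (x i)).

Definition is_optimal (m p : nat) (n : nat -> nat) (f : nat -> vec -> R)
  (X : nat -> vec -> Prop) (A : nat -> nat -> nat -> R) (b : nat -> vec)
  (xs : nat -> vec) : Prop :=
  let feasible (y : nat -> vec) :=
    (forall i, (i < m)%nat -> X i (y i)) /\
    (forall k, (k < p)%nat ->
       rsum m (fun i => matvec (n i) (A i) (y i) k - b i k) = 0) in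
  feasible xs /\ forall y, feasible y -> Fobj m f xs <= Fobj m f y.

(* xhat_i[T] = sum_{t=1}^T (t-1) x_i[t] / (T(T-1)/2) *)
Definition xhat (x : nat -> nat -> vec) (T : nat) : nat -> vec :=
  fun i k => rsum T (fun s => INR s * x i (S s) k) / (INR T * (INR T - 1) / 2).

(* The dual iterates [lam_i] are push-sum estimates of the network average [theta_avg] of
   the [theta_i].  Since every window of [Bc] steps is strongly connected, every product of
   [m Bc] consecutive weight matrices has entries at least [m^-(m Bc)], so the push-sum rows
   contract geometrically at rate [eta], and [|lam_i(s+1) - theta_avg(s)|_1] is at most
   [4/delta] times the [eta]-convolution of the initial values with the stepsizes [q/t].
   Optimality of [x_i(s+1)] for the regularized Lagrangian bounds the gap of [x(s+1)] by
   [sum_i lam_i . (A_i x*_i - A_i x_i(s+1))]; replacing [lam_i] by [theta_avg] costs the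
   consensus error, and the [theta_avg] part telescopes in [s |theta_avg(s)|^2] as soon as
   [q gamma / m >= 1].  Weighting step [s] by [s], summing (the harmonic sum gives [ln T])
   and applying Jensen's inequality to [xhat] yields the bound. *)

From Stdlib Require Import Reals Lra Lia Relations FunctionalExtensionality.
Open Scope R_scope.

(** * Finite sums *)

Lemma rsum_ext n f g :
  (forall k, (k < n)%nat -> f k = g k) -> rsum n f = rsum n g.
Proof.
  induction n as [|n IH]; intros Hfg; simpl; [reflexivity|].
  rewrite IH by (intros; apply Hfg; lia). rewrite Hfg by lia. reflexivity.
Qed.

Lemma rsum_le n f g :
  (forall k, (k < n)%nat -> f k <= g k) -> rsum n f <= rsum n g.
Proof.
  induction n as [|n IH]; intros Hfg; simpl; [lra|].
  apply Rplus_le_compat; [apply IH; intros k Hk|]; apply Hfg; lia.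
Qed.

Lemma rsum_const n c : rsum n (fun _ => c) = INR n * c.
Proof. induction n as [|n IH]; [simpl; lra|]. rewrite S_INR; simpl rsum; rewrite IH; lra. Qed.

Lemma rsum_eq0 n f : (forall k, (k < n)%nat -> f k = 0) -> rsum n f = 0.
Proof. intros Hf. rewrite (rsum_ext n f (fun _ => 0)), rsum_const by auto. lra. Qed.

Lemma rsum_nonneg n f : (forall k, (k < n)%nat -> 0 <= f k) -> 0 <= rsum n f.
Proof. intros Hf. rewrite <- (rsum_eq0 n (fun _ => 0)) by auto. now apply rsum_le. Qed.

Lemma rsum_plus n f g : rsum n (fun k => f k + g k) = rsum n f + rsum n g.
Proof. induction n as [|n IH]; simpl; [lra|]. rewrite IH; lra. Qed.

Lemma rsum_minus n f g : rsum n (fun k => f k - g k) = rsum n f - rsum n g.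
Proof. induction n as [|n IH]; simpl; [lra|]. rewrite IH; lra. Qed.

Lemma rsum_opp n f : rsum n (fun k => - f k) = - rsum n f.
Proof. induction n as [|n IH]; simpl; [lra|]. rewrite IH; lra. Qed.

Lemma rsum_scal_l n c f : rsum n (fun k => c * f k) = c * rsum n f.
Proof. induction n as [|n IH]; simpl; [lra|]. rewrite IH; lra. Qed.

Lemma rsum_scal_r n c f : rsum n (fun k => f k * c) = rsum n f * c.
Proof. induction n as [|n IH]; simpl; [lra|]. rewrite IH; lra. Qed.

Lemma rsum_swap n m (f : nat -> nat -> R) :
  rsum n (fun i => rsum m (fun j => f i j)) = rsum m (fun j => rsum n (fun i => f i j)).
Proof.
  induction n as [|n IH]; simpl.
  - symmetry; apply rsum_eq0; auto.
  - rewrite IH, <- rsum_plus. reflexivity.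
Qed.

Lemma Rabs_rsum_le n f : Rabs (rsum n f) <= rsum n (fun k => Rabs (f k)).
Proof.
  induction n as [|n IH]; simpl; [rewrite Rabs_R0; lra|].
  eapply Rle_trans; [apply Rabs_triang|]. lra.
Qed.

Lemma rsum_ge_term n f k :
  (forall j, (j < n)%nat -> 0 <= f j) -> (k < n)%nat -> f k <= rsum n f.
Proof.
  induction n as [|n IH]; intros Hf Hk; [lia|]. simpl.
  assert (0 <= f n) by (apply Hf; lia).
  destruct (Nat.eq_dec k n) as [->|Hkn].
  - assert (0 <= rsum n f) by (apply rsum_nonneg; intros; apply Hf; lia). lra.
  - assert (f k <= rsum n f) by (apply IH; [intros; apply Hf|]; lia). lra.
Qed.

Lemma rsum_S n f : rsum (S n) f = rsum n f + f n.
Proof. reflexivity. Qed.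

Lemma rsum_S_l n f : rsum (S n) f = f O + rsum n (fun k => f (S k)).
Proof. induction n as [|n IH]; simpl in *; [lra|]. rewrite IH. lra. Qed.

Lemma rsum_rev n f : rsum n f = rsum n (fun k => f (n - 1 - k)%nat).
Proof.
  induction n as [|n IH]; [reflexivity|].
  rewrite rsum_S, rsum_S_l, IH, Rplus_comm.
  replace (S n - 1 - 0)%nat with n by lia.
  f_equal. apply rsum_ext; intros; f_equal; lia.
Qed.

Definition basis (k : nat) : nat -> R := fun j => if Nat.eqb j k then 1 else 0.

Lemma basis_sym k j : basis k j = basis j k.
Proof. unfold basis. now rewrite Nat.eqb_sym. Qed.

Lemma basis_bounds k j : 0 <= basis k j <= 1.
Proof. unfold basis; destruct (Nat.eqb j k); lra. Qed.

Lemma rsum_basis_r n f k : (k < n)%nat -> rsum n (fun j => f j * basis k j) = f k.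
Proof.
  induction n as [|n IH]; intros Hk; [lia|]. simpl.
  destruct (Nat.eq_dec k n) as [->|Hkn].
  - rewrite rsum_eq0; unfold basis.
    + rewrite Nat.eqb_refl; lra.
    + intros j Hj. destruct (Nat.eqb_spec j n); [lia|lra].
  - rewrite IH by lia. unfold basis. destruct (Nat.eqb_spec n k); [lia|lra].
Qed.

Lemma rsum_basis_l n f k : (k < n)%nat -> rsum n (fun j => basis k j * f j) = f k.
Proof. intros Hk. rewrite <- (rsum_basis_r n f k Hk). apply rsum_ext; intros; lra. Qed.

Lemma rsum_indicator n (P : nat -> bool) c :
  rsum n (fun k => if P k then c else 0) = INR (countb n P) * c.
Proof. induction n as [|n IH]; simpl; [lra|]. rewrite IH, plus_INR. destruct (P n); simpl; lra. Qed.

Lemma countb_le n P : (countb n P <= n)%nat.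
Proof. induction n as [|n IH]; simpl; [lia|]. destruct (P n); lia. Qed.

Lemma countb_pos n P k : (k < n)%nat -> P k = true -> (1 <= countb n P)%nat.
Proof.
  induction n as [|n IH]; intros Hk HP; [lia|]. simpl.
  destruct (Nat.eq_dec k n) as [->|Hkn]; [rewrite HP; lia|].
  specialize (IH ltac:(lia) HP). lia.
Qed.

Lemma countb_mono n (P Q : nat -> bool) :
  (forall k, (k < n)%nat -> P k = true -> Q k = true) -> (countb n P <= countb n Q)%nat.
Proof.
  induction n as [|n IH]; intros HPQ; simpl; [lia|].
  assert (countb n P <= countb n Q)%nat by (apply IH; intros; apply HPQ; auto; lia).
  destruct (P n) eqn:HPn; [rewrite HPQ by (auto; lia); lia|]. destruct (Q n); lia.
Qed.

Lemma countb_lt n (P Q : nat -> bool) j :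
  (forall k, (k < n)%nat -> P k = true -> Q k = true) ->
  (j < n)%nat -> P j = false -> Q j = true -> (countb n P < countb n Q)%nat.
Proof.
  induction n as [|n IH]; intros HPQ Hj HPj HQj; [lia|]. simpl.
  assert (HPQ' : forall k, (k < n)%nat -> P k = true -> Q k = true)
    by (intros; apply HPQ; auto; lia).
  destruct (Nat.eq_dec j n) as [->|Hjn].
  - rewrite HPj, HQj. pose proof (countb_mono n P Q HPQ'). lia.
  - specialize (IH HPQ' ltac:(lia) HPj HQj).
    destruct (P n) eqn:HPn; [rewrite HPQ by (auto; lia); lia|]. destruct (Q n); lia.
Qed.

Lemma countb_lt_false n P : (countb n P < n)%nat -> exists j, (j < n)%nat /\ P j = false.
Proof.
  induction n as [|n IH]; intros H; simpl in H; [lia|].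
  destruct (P n) eqn:HPn; [|exists n; auto].
  destruct IH as [j [Hj HPj]]; [lia|]. exists j; split; auto; lia.
Qed.

Lemma countb_pos_true n P : (1 <= countb n P)%nat -> exists j, (j < n)%nat /\ P j = true.
Proof.
  induction n as [|n IH]; intros H; simpl in H; [lia|].
  destruct (P n) eqn:HPn; [exists n; auto|].
  destruct IH as [j [Hj HPj]]; [lia|]. exists j; split; auto; lia.
Qed.

Lemma countb_full n P : (n <= countb n P)%nat -> forall j, (j < n)%nat -> P j = true.
Proof.
  intros H j Hj. destruct (P j) eqn:HPj; auto. exfalso.
  pose proof (countb_lt n P (fun _ => true) j (fun _ _ _ => eq_refl) Hj HPj eq_refl).
  pose proof (countb_le n (fun _ => true)). lia.
Qed.

Lemma rmax_upto_ge n f k : (k <= n)%nat -> f k <= rmax_upto n f.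
Proof.
  induction n as [|n IH]; intros Hk; simpl; [replace k with O by lia; lra|].
  destruct (Nat.eq_dec k (S n)) as [->|]; [apply Rmax_r|].
  eapply Rle_trans; [apply IH; lia|apply Rmax_l].
Qed.

(* Lagrange's identity: the gap is half of [sum_i sum_j (a_i c_j - a_j c_i)^2]. *)
Lemma cauchy_schwarz_sq n a c :
  rsum n (fun k => a k * c k) ^ 2 <= rsum n (fun k => a k ^ 2) * rsum n (fun k => c k ^ 2).
Proof.
  set (SA := rsum n (fun k => a k ^ 2)). set (SC := rsum n (fun k => c k ^ 2)).
  set (P := rsum n (fun k => a k * c k)).
  assert (Hgap : rsum n (fun i => rsum n (fun j => (a i * c j - a j * c i) ^ 2))
                 = 2 * (SA * SC - P ^ 2)).
  { rewrite (rsum_ext n _ (fun i => a i ^ 2 * SC + SA * c i ^ 2 - 2 * (a i * c i) * P)).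
    - rewrite rsum_minus, rsum_plus, rsum_scal_r, rsum_scal_l, rsum_scal_r.
      rewrite (rsum_scal_l n 2 (fun i => a i * c i)). fold SA SC P. ring.
    - intros i _. unfold SA, SC, P.
      rewrite <- rsum_scal_l, <- rsum_scal_r, <- (rsum_scal_l n (2 * (a i * c i))).
      rewrite <- rsum_plus, <- rsum_minus. apply rsum_ext; intros; ring. }
  assert (0 <= rsum n (fun i => rsum n (fun j => (a i * c j - a j * c i) ^ 2))).
  { apply rsum_nonneg; intros; apply rsum_nonneg; intros; apply pow2_ge_0. }
  lra.
Qed.

Lemma rsum_sq_le n a : rsum n a ^ 2 <= INR n * rsum n (fun k => a k ^ 2).
Proof.
  pose proof (cauchy_schwarz_sq n a (fun _ => 1)) as H. cbv beta in H.
  rewrite (rsum_ext n (fun k => a k * 1) a), (rsum_ext n (fun _ => 1 ^ 2) (fun _ => 1)),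
    rsum_const in H by (intros; ring).
  lra.
Qed.

Lemma norm1_le_norm2 n a : norm1 n a <= sqrt (INR n) * norm2 n a.
Proof.
  unfold norm1, norm2. rewrite <- sqrt_mult by (auto using pos_INR, rsum_nonneg, pow2_ge_0).
  rewrite <- (sqrt_pow2 (rsum n (fun k => Rabs (a k))))
    by (apply rsum_nonneg; intros; apply Rabs_pos).
  apply sqrt_le_1_alt.
  rewrite (rsum_ext n (fun k => a k ^ 2) (fun k => Rabs (a k) ^ 2))
    by (intros; now rewrite pow2_abs).
  apply rsum_sq_le.
Qed.

Lemma norm2_sq n v : norm2 n v ^ 2 = rsum n (fun k => v k ^ 2).
Proof. unfold norm2. rewrite pow2_sqrt; auto. apply rsum_nonneg; intros; apply pow2_ge_0. Qed.

Lemma Rabs_le_norm2 n v k : (k < n)%nat -> Rabs (v k) <= norm2 n v.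
Proof.
  intros Hk. unfold norm2. rewrite <- sqrt_Rsqr_abs. apply sqrt_le_1_alt.
  unfold Rsqr. replace (v k * v k) with (v k ^ 2) by ring.
  apply (rsum_ge_term n (fun k => v k ^ 2)); auto. intros; apply pow2_ge_0.
Qed.

Lemma cauchy_schwarz n a c : Rabs (rsum n (fun k => a k * c k)) <= norm2 n a * norm2 n c.
Proof.
  unfold norm2. rewrite <- sqrt_mult by (apply rsum_nonneg; intros; apply pow2_ge_0).
  rewrite <- (sqrt_pow2 (Rabs _)) by apply Rabs_pos. rewrite pow2_abs.
  apply sqrt_le_1_alt, cauchy_schwarz_sq.
Qed.

Lemma rsum_sq_sub_scal_le n a c g : 0 <= g ->
  rsum n (fun k => (a k - g * c k) ^ 2) <= (norm2 n a + g * norm2 n c) ^ 2.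
Proof.
  intros Hg.
  rewrite (rsum_ext n _ (fun k => a k ^ 2 - 2 * g * (a k * c k) + g ^ 2 * c k ^ 2))
    by (intros; ring).
  rewrite rsum_plus, rsum_minus, !rsum_scal_l, <- !norm2_sq.
  pose proof (cauchy_schwarz n a c) as Hcs.
  pose proof (Rle_abs (- rsum n (fun k => a k * c k))) as Habs. rewrite Rabs_Ropp in Habs.
  assert (- (2 * g * rsum n (fun k => a k * c k)) <= 2 * g * (norm2 n a * norm2 n c)) by nra.
  nra.
Qed.

Lemma rsum_shift_weights n w r a :
  rsum n w = 1 -> rsum n (fun k => r k * w k) - a = rsum n (fun k => (r k - a) * w k).
Proof.
  intros Hw. rewrite (rsum_ext n (fun k => (r k - a) * w k) (fun k => r k * w k - a * w k))
    by (intros; ring).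
  rewrite rsum_minus, rsum_scal_l, Hw. ring.
Qed.

Lemma convex_comb_bounds n w r a c :
  (forall k, (k < n)%nat -> 0 <= w k) -> rsum n w = 1 ->
  (forall k, (k < n)%nat -> a <= r k <= c) ->
  a <= rsum n (fun k => r k * w k) <= c.
Proof.
  intros Hw0 Hw1 Hr.
  pose proof (rsum_shift_weights n w r a Hw1) as Ha.
  pose proof (rsum_shift_weights n w r c Hw1) as Hc.
  assert (0 <= rsum n (fun k => (r k - a) * w k)).
  { apply rsum_nonneg; intros k Hk. specialize (Hr k Hk). apply Rmult_le_pos; auto; lra. }
  assert (rsum n (fun k => (r k - c) * w k) <= 0).
  { rewrite <- (rsum_eq0 n (fun _ => 0)) by auto. apply rsum_le; intros k Hk.
    specialize (Hr k Hk). specialize (Hw0 k Hk). nra. }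
  lra.
Qed.

Lemma convex_comb_contract n w r a c ka kb :
  (forall k, (k < n)%nat -> 0 <= w k) -> rsum n w = 1 ->
  (forall k, (k < n)%nat -> a <= r k <= c) ->
  (ka < n)%nat -> (kb < n)%nat -> r ka = a -> r kb = c ->
  a + w kb * (c - a) <= rsum n (fun k => r k * w k) <= c - w ka * (c - a).
Proof.
  intros Hw0 Hw1 Hr Hka Hkb Ha Hc.
  pose proof (rsum_shift_weights n w r a Hw1) as Hsa.
  pose proof (rsum_shift_weights n w r c Hw1) as Hsc.
  rewrite (rsum_ext n (fun k => (r k - c) * w k) (fun k => - ((c - r k) * w k))), rsum_opp
    in Hsc by (intros; ring).
  assert (Hpos : forall k, (k < n)%nat -> 0 <= (r k - a) * w k /\ 0 <= (c - r k) * w k).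
  { intros k Hk. specialize (Hr k Hk). split; apply Rmult_le_pos; auto; lra. }
  pose proof (rsum_ge_term n (fun k => (r k - a) * w k) kb (fun k Hk => proj1 (Hpos k Hk)) Hkb).
  pose proof (rsum_ge_term n (fun k => (c - r k) * w k) ka (fun k Hk => proj2 (Hpos k Hk)) Hka).
  cbv beta in *. rewrite Ha, Hc in *. lra.
Qed.

Lemma exists_min_max_index (r : nat -> R) n : (1 <= n)%nat ->
  exists ka kb, (ka < n)%nat /\ (kb < n)%nat /\
    forall j, (j < n)%nat -> r ka <= r j <= r kb.
Proof.
  induction n as [|n IH]; intros Hn; [lia|].
  destruct (Nat.eq_dec n 0) as [->|Hn0].
  { exists O, O. split; [lia|split; [lia|]]. intros j Hj. replace j with O by lia. lra. }
  destruct IH as [ka [kb [Hka [Hkb H]]]]; [lia|].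
  destruct (Rle_dec (r ka) (r n)); destruct (Rle_dec (r n) (r kb)).
  - exists ka, kb; split; [lia|split; [lia|]].
    intros j Hj. destruct (Nat.eq_dec j n) as [->|]; [lra|apply H; lia].
  - exists ka, n; split; [lia|split; [lia|]].
    intros j Hj. destruct (Nat.eq_dec j n) as [->|]; [lra|]. specialize (H j ltac:(lia)); lra.
  - exists n, kb; split; [lia|split; [lia|]].
    intros j Hj. destruct (Nat.eq_dec j n) as [->|]; [lra|]. specialize (H j ltac:(lia)); lra.
  - specialize (H ka Hka). lra.
Qed.

(** * Mixing by the weight matrices *)

Section Mixing.
Variable m : nat.
Variable E : nat -> nat -> nat -> bool.

Lemma outdeg_ge1 t j : (j < m)%nat -> 1 <= outdeg m E t j.
Proof.
  intros Hj. unfold outdeg. apply (le_INR 1).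
  apply (countb_pos _ _ j Hj). unfold in_out. now rewrite Nat.eqb_refl.
Qed.

Lemma Wt_nonneg t i j : (j < m)%nat -> 0 <= Wt m E t i j.
Proof.
  intros Hj. unfold Wt. destruct (_ || _)%bool; [|lra].
  pose proof (outdeg_ge1 t j Hj). apply Rlt_le, Rinv_0_lt_compat; lra.
Qed.

Lemma Wt_ge_inv_m t i j :
  (j < m)%nat -> (Nat.eqb j i || E t j i)%bool = true -> / INR m <= Wt m E t i j.
Proof.
  intros Hj Hji. unfold Wt. rewrite Hji. pose proof (outdeg_ge1 t j Hj).
  apply Rinv_le_contravar; [lra|]. apply le_INR, countb_le.
Qed.

Lemma Wt_colsum t j : (j < m)%nat -> rsum m (fun i => Wt m E t i j) = 1.
Proof.
  intros Hj. pose proof (outdeg_ge1 t j Hj) as Hd.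
  rewrite (rsum_ext _ _ (fun i => if in_out E t j i then / outdeg m E t j else 0)).
  - rewrite rsum_indicator. fold (outdeg m E t j). field. lra.
  - intros i _. unfold Wt, in_out. now rewrite Nat.eqb_sym.
Qed.

(* [row_mulWs t d r] is the row vector [r^T W[t] W[t-1] ... W[t-d+1]]; in particular
   [row_mulWs t d (basis i) j] is the [(i,j)] entry of that product of [d] matrices. *)
Definition row_mulW (t : nat) (r : nat -> R) : nat -> R :=
  fun j => rsum m (fun l => r l * Wt m E t l j).

Fixpoint row_mulWs (t d : nat) (r : nat -> R) : nat -> R :=
  match d with O => r | S d' => row_mulW (t - d') (row_mulWs t d' r) end.

Lemma row_mulWs_add t d1 d2 r :
  row_mulWs t (d1 + d2) r = row_mulWs (t - d1) d2 (row_mulWs t d1 r).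
Proof.
  induction d2 as [|d2 IH]; [now rewrite Nat.add_0_r|].
  rewrite <- plus_n_Sm. simpl. rewrite IH.
  now replace (t - (d1 + d2))%nat with (t - d1 - d2)%nat by lia.
Qed.

Lemma row_mulWs_decomp t d r j : (j < m)%nat ->
  row_mulWs t d r j = rsum m (fun k => r k * row_mulWs t d (basis k) j).
Proof.
  revert j. induction d as [|d IH]; intros j Hj; simpl.
  - rewrite (rsum_ext m _ (fun k => r k * basis j k)) by (intros; now rewrite basis_sym).
    now rewrite rsum_basis_r.
  - unfold row_mulW.
    rewrite (rsum_ext _ _ (fun l => rsum m (fun k =>
      r k * row_mulWs t d (basis k) l * Wt m E (t - d) l j)))
      by (intros l Hl; rewrite IH, <- rsum_scal_r by auto; reflexivity).
    rewrite rsum_swap. apply rsum_ext. intros k _.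
    rewrite <- rsum_scal_l. apply rsum_ext; intros; ring.
Qed.

Lemma row_mulWs_bounds t d r a c :
  (forall k, (k < m)%nat -> a <= r k <= c) ->
  forall j, (j < m)%nat -> a <= row_mulWs t d r j <= c.
Proof.
  intros Hr. induction d as [|d IH]; simpl; auto.
  intros j Hj. apply convex_comb_bounds; auto.
  - intros; apply Wt_nonneg; auto.
  - apply Wt_colsum; auto.
Qed.

Lemma row_mulWs_basis_bounds t d i j : (j < m)%nat -> 0 <= row_mulWs t d (basis i) j <= 1.
Proof. apply row_mulWs_bounds. intros; apply basis_bounds. Qed.

Lemma row_mulWs_basis_colsum t d j : (j < m)%nat ->
  rsum m (fun k => row_mulWs t d (basis k) j) = 1.
Proof.
  intros Hj. pose proof (row_mulWs_bounds t d (fun _ => 1) 1 1 ltac:(intros; lra) j Hj) as H1.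
  rewrite row_mulWs_decomp in H1 by auto.
  rewrite (rsum_ext m _ (fun k => 1 * row_mulWs t d (basis k) j)); [lra|]. intros; ring.
Qed.

Lemma row_mulWs_contract t L r a c ka kb eps :
  (forall k j, (k < m)%nat -> (j < m)%nat -> eps <= row_mulWs t L (basis k) j) ->
  (forall k, (k < m)%nat -> a <= r k <= c) -> (ka < m)%nat -> (kb < m)%nat ->
  r ka = a -> r kb = c ->
  forall j, (j < m)%nat -> a + eps * (c - a) <= row_mulWs t L r j <= c - eps * (c - a).
Proof.
  intros Heps Hr Hka Hkb Ha Hc j Hj. rewrite row_mulWs_decomp by auto.
  assert (Hca : 0 <= c - a) by (specialize (Hr ka Hka); lra).
  pose proof (Heps ka j Hka Hj). pose proof (Heps kb j Hkb Hj).
  destruct (convex_comb_contract m (fun k => row_mulWs t L (basis k) j) r a c ka kb)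
    as [Hlo Hhi]; auto.
  - intros k _. apply row_mulWs_basis_bounds; auto.
  - apply row_mulWs_basis_colsum; auto.
  - split; [eapply Rle_trans; [|apply Hlo]|eapply Rle_trans; [apply Hhi|]]; nra.
Qed.

End Mixing.

Lemma clos_refl_trans_crossing (R0 : nat -> nat -> Prop) (P : nat -> bool) x y :
  clos_refl_trans nat R0 x y -> P y = true -> P x = false ->
  exists a c, R0 a c /\ P a = false /\ P c = true.
Proof.
  induction 1 as [x y Hxy| |x z y _ IH1 _ IH2]; intros Hy Hx.
  - exists x, y; auto.
  - congruence.
  - destruct (P z) eqn:Hz; [apply IH1|apply IH2]; auto.
Qed.

Lemma inv_INR_pos m : (1 <= m)%nat -> 0 < / INR m.
Proof. intros Hm. apply Rinv_0_lt_compat, lt_0_INR. lia. Qed.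

(* The nodes [j] whose entry after [l] steps is at least [m^-l] form a set that grows along
   every edge used at the corresponding time; as each window of [Bc] steps is strongly
   connected, it gains a node per window until it contains all [m] nodes. *)
Section Positivity.
Variables (m Bc : nat) (E : nat -> nat -> nat -> bool).
Hypothesis Hm : (1 <= m)%nat.
Hypothesis HA2 : assumption_A2 m Bc E.
Variables (tau k : nat).
Hypothesis Hk : (k < m)%nat.

Let v l := row_mulWs m E tau l (basis k).

Definition reached (l j : nat) : bool :=
  if Rle_dec ((/ INR m) ^ l) (v l j) then true else false.

Lemma reached_step l j j' : (j < m)%nat -> (j' < m)%nat ->
  (Nat.eqb j j' || E (tau - l)%nat j j')%bool = true ->
  reached l j' = true -> reached (S l) j = true.
Proof.
  intros Hj Hj' Hedge. unfold reached.
  destruct (Rle_dec _ (v l j')) as [Hv|]; [|discriminate]. intros _.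
  destruct (Rle_dec _ _) as [|Hnot]; auto. exfalso. apply Hnot.
  unfold v; simpl; fold (v l). unfold row_mulW.
  pose proof (inv_INR_pos m Hm).
  eapply Rle_trans; [|apply (rsum_ge_term m (fun l0 => v l l0 * Wt m E (tau - l) l0 j) j')]; auto.
  - simpl pow. rewrite (Rmult_comm (v l j')).
    apply Rmult_le_compat; auto using Wt_ge_inv_m; try lra. apply pow_le; lra.
  - intros j0 Hj0. apply Rmult_le_pos; [apply row_mulWs_basis_bounds|apply Wt_nonneg]; auto.
Qed.

Lemma reached_mono l l' j : (j < m)%nat -> (l <= l')%nat ->
  reached l j = true -> reached l' j = true.
Proof.
  intros Hj Hl. induction Hl as [|l' _ IH]; auto. intros Hr.
  apply (reached_step l' j j); auto. now rewrite Nat.eqb_refl.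
Qed.

Let reached_count l := countb m (reached l).

Lemma reached_count_mono l l' : (l <= l')%nat -> (reached_count l <= reached_count l')%nat.
Proof. intros Hl. apply countb_mono. intros j Hj. now apply reached_mono. Qed.

Lemma reached_count_window w l0 : (l0 + (w + 1) * Bc = tau + 1)%nat ->
  (1 <= reached_count l0)%nat -> (reached_count l0 < m)%nat ->
  (reached_count l0 < reached_count (l0 + Bc))%nat.
Proof.
  intros Hl Hpos Hlt.
  destruct (countb_lt_false _ _ Hlt) as [j [Hj Hjout]].
  destruct (countb_pos_true _ _ Hpos) as [k0 [Hk0 Hk0in]].
  destruct HA2 as [HB Hsc].
  destruct (clos_refl_trans_crossing _ (reached l0) _ _ (Hsc w j k0 Hj Hk0) Hk0in Hjout)
    as [a [c [[Ha [Hc [l' [Hl' Hedge]]]] [Haout Hcin]]]].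
  apply (countb_lt m _ _ a); auto.
  - intros kk Hkk. apply reached_mono; auto; lia.
  - rewrite Nat.mul_add_distr_r, Nat.mul_1_l in Hl, Hl'.
    apply (reached_mono (S (tau - l'))); [auto|lia|].
    apply (reached_step (tau - l') a c); auto.
    + replace (tau - (tau - l'))%nat with l' by lia. rewrite Hedge. apply Bool.orb_true_r.
    + apply (reached_mono l0); auto; lia.
Qed.

Lemma row_mulWs_basis_ge j : (m * Bc <= tau + 1)%nat -> (j < m)%nat ->
  (/ INR m) ^ (m * Bc) <= row_mulWs m E tau (m * Bc) (basis k) j.
Proof.
  intros HL Hj. fold (v (m * Bc)).
  enough (Hr : reached (m * Bc) j = true)
    by (unfold reached in Hr; destruct (Rle_dec _ _); [auto|discriminate]).
  destruct HA2 as [HB _].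
  assert (H0 : reached 0 k = true).
  { unfold reached, v. simpl. unfold basis. rewrite Nat.eqb_refl.
    destruct (Rle_dec _ _) as [|Hn]; auto. lra. }
  destruct (Nat.eq_dec m 1) as [Hm1|Hm1].
  { replace j with k by lia. apply (reached_mono 0); auto; lia. }
  set (w := ((tau + 1) / Bc)%nat). set (r0 := ((tau + 1) mod Bc)%nat).
  assert (Hdiv : (tau + 1 = Bc * w + r0)%nat) by apply Nat.div_mod_eq.
  assert (Hr0 : (r0 < Bc)%nat) by (apply Nat.mod_upper_bound; lia).
  assert (Hw : (m <= w)%nat) by nia.
  assert (Hgrow : forall i, (i <= m - 1)%nat ->
            (Nat.min (i + 1) m <= reached_count (r0 + i * Bc))%nat).
  { induction i as [|i IH]; intros Hi.
    - assert (1 <= reached_count r0)%nat.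
      { apply (countb_pos _ _ k); auto. apply (reached_mono 0); auto; lia. }
      rewrite Nat.mul_0_l, Nat.add_0_r. lia.
    - specialize (IH ltac:(lia)).
      replace (r0 + S i * Bc)%nat with (r0 + i * Bc + Bc)%nat by lia.
      destruct (Nat.lt_ge_cases (reached_count (r0 + i * Bc)) m).
      + pose proof (reached_count_window (w - 1 - i) (r0 + i * Bc) ltac:(nia) ltac:(lia) H).
        lia.
      + pose proof (reached_count_mono (r0 + i * Bc) (r0 + i * Bc + Bc) ltac:(lia)). lia. }
  specialize (Hgrow (m - 1)%nat ltac:(lia)).
  apply (reached_mono (r0 + (m - 1) * Bc)); auto; [nia|].
  apply countb_full with m; auto. unfold reached_count in Hgrow. lia.
Qed.

End Positivity.

Lemma pow_le_pow_anti x k k' : 0 <= x <= 1 -> (k <= k')%nat -> x ^ k' <= x ^ k.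
Proof.
  intros Hx Hk. replace k' with (k + (k' - k))%nat by lia. rewrite pow_add.
  assert (x ^ (k' - k) <= 1) by (rewrite <- (pow1 (k' - k)); apply pow_incr; lra).
  assert (0 <= x ^ k) by (apply pow_le; lra). nra.
Qed.

Lemma eta_nonneg m Bc : 0 <= eta m Bc.
Proof. unfold eta, rroot. destruct (Rlt_dec _ _); [|lra]. left; apply exp_pos. Qed.

Lemma eta_spec m Bc : (2 <= m)%nat -> (1 <= Bc)%nat ->
  eta m Bc < 1 /\ eta m Bc ^ (m * Bc) = 1 - (/ INR m) ^ (m * Bc) /\
  0 < (/ INR m) ^ (m * Bc) <= / 2.
Proof.
  intros Hm HB. set (L := (m * Bc)%nat).
  assert (HmR : 2 <= INR m) by (apply (le_INR 2); lia).
  assert (HL : (1 <= L)%nat) by (unfold L; nia).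
  assert (HmL : INR m <= INR m ^ L) by (rewrite <- (pow_1 (INR m)) at 1; apply Rle_pow; lra || lia).
  assert (Heps : 0 < (/ INR m) ^ L <= / 2).
  { rewrite pow_inv. split; [apply Rinv_0_lt_compat, pow_lt; lra|].
    apply Rinv_le_contravar; lra. }
  assert (Hx : 0 < 1 - / INR m ^ L < 1) by (rewrite <- pow_inv; lra).
  assert (HLR : 0 < INR L) by (apply lt_0_INR; lia).
  unfold eta, rroot. fold L. destruct (Rlt_dec 0 _) as [_|]; [|lra].
  split; [|split]; auto.
  - eapply Rlt_le_trans; [apply Rlt_Rpower_l with (b := 1); [apply Rinv_0_lt_compat|]; lra|].
    unfold Rpower. rewrite ln_1, Rmult_0_r, exp_0. lra.
  - rewrite <- Rpower_pow by apply exp_pos.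
    rewrite Rpower_mult, Rinv_l, Rpower_1, pow_inv; lra.
Qed.

Lemma eta_range m Bc E : (1 <= m)%nat -> assumption_A2 m Bc E -> 0 <= eta m Bc < 1.
Proof.
  intros Hm [HB _]. split; [apply eta_nonneg|].
  destruct (Nat.eq_dec m 1) as [->|Hm1].
  - unfold eta, rroot. rewrite pow1. destruct (Rlt_dec _ _); lra.
  - apply eta_spec; lia.
Qed.

(* Each block of [L = m Bc] steps contracts the range of a row by [1 - m^-L = eta^L];
   the incomplete last block costs the factor [4]. *)
Section Ergodicity.
Variables (m Bc : nat) (E : nat -> nat -> nat -> bool).
Hypothesis Hm : (1 <= m)%nat.
Hypothesis HA2 : assumption_A2 m Bc E.
Variables (t i : nat).
Hypothesis Hi : (i < m)%nat.

Let row d := row_mulWs m E t d (basis i).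

Lemma row_mulWs_blocks_range nb : (2 <= m)%nat -> (nb * (m * Bc) <= t + 1)%nat ->
  exists a c, (forall j, (j < m)%nat -> a <= row (nb * (m * Bc)) j <= c) /\
              c - a <= eta m Bc ^ (nb * (m * Bc)).
Proof.
  intros Hm2. assert (HB : (1 <= Bc)%nat) by (destruct HA2; lia).
  destruct (eta_spec m Bc Hm2 HB) as [He1 [HeL Heps]]. pose proof (eta_nonneg m Bc).
  set (L := (m * Bc)%nat) in *. set (e := eta m Bc) in *. set (eps := (/ INR m) ^ L) in *.
  induction nb as [|nb IH]; intros Hnb.
  { exists 0, 1. split; [intros j Hj; apply basis_bounds|simpl; lra]. }
  destruct IH as [a [c [Hac Hw]]]; [nia|].
  destruct (exists_min_max_index (row (nb * L)) m Hm) as [ka [kb [Hka [Hkb Hmm]]]].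
  set (a' := row (nb * L) ka). set (c' := row (nb * L) kb).
  assert (Hw' : 0 <= c' - a' <= c - a).
  { pose proof (Hac ka Hka). pose proof (Hac kb Hkb). pose proof (Hmm kb Hkb).
    unfold a', c'; lra. }
  exists (a' + eps * (c' - a')), (c' - eps * (c' - a')). split.
  - intros j Hj. unfold row. rewrite Nat.mul_succ_l, row_mulWs_add. fold (row (nb * L)).
    apply row_mulWs_contract with ka kb; auto.
    intros k j0 Hk Hj0. apply (row_mulWs_basis_ge m Bc E Hm HA2); auto. nia.
  - rewrite Nat.mul_succ_l, pow_add, HeL.
    assert (0 <= e ^ (nb * L)) by (apply pow_le; lra).
    assert ((1 - eps) * (c' - a') <= (1 - eps) * e ^ (nb * L))
      by (apply Rmult_le_compat_l; lra).
    nra.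
Qed.

Lemma row_mulWs_range d : (d <= t)%nat ->
  exists a c, (forall j, (j < m)%nat -> a <= row (S d) j <= c) /\ c - a <= 4 * eta m Bc ^ d.
Proof.
  intros Hd. pose proof (eta_nonneg m Bc) as He0.
  assert (Hed : 0 <= eta m Bc ^ d) by (apply pow_le; auto).
  destruct (Nat.eq_dec m 1) as [Hm1|Hm1].
  { exists (row (S d) 0%nat), (row (S d) 0%nat).
    split; [intros j Hj; replace j with 0%nat by lia|]; lra. }
  assert (HB : (1 <= Bc)%nat) by (destruct HA2; lia).
  destruct (eta_spec m Bc ltac:(lia) HB) as [He1 [HeL Heps]].
  set (L := (m * Bc)%nat) in *. set (e := eta m Bc) in *.
  assert (HL1 : (1 <= L)%nat) by (unfold L; nia).
  set (nb := (S d / L)%nat). set (r0 := (S d mod L)%nat).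
  assert (Hdm : (S d = L * nb + r0)%nat) by apply Nat.div_mod_eq.
  assert (Hr : (r0 < L)%nat) by (apply Nat.mod_upper_bound; lia).
  destruct (row_mulWs_blocks_range nb ltac:(lia) ltac:(nia)) as [a [c [Hac Hw]]].
  fold L e in Hac, Hw. exists a, c. split.
  - intros j Hj. unfold row. replace (S d) with (nb * L + (S d - nb * L))%nat by nia.
    rewrite row_mulWs_add. apply row_mulWs_bounds; auto.
  - enough (e ^ (nb * L) <= 4 * e ^ d) by lra.
    destruct (Nat.eq_dec r0 0) as [Hr0|Hr0].
    + replace (nb * L)%nat with (S d) by nia. simpl.
      assert (0 <= (4 - e) * e ^ d) by (apply Rmult_le_pos; lra). lra.
    + replace d with (nb * L + (r0 - 1))%nat by nia. rewrite pow_add.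
      assert (e ^ L <= e ^ (r0 - 1)) by (apply pow_le_pow_anti; lra || lia).
      assert (0 <= e ^ (nb * L)) by (apply pow_le; lra).
      assert (e ^ (nb * L) * e ^ L <= e ^ (nb * L) * e ^ (r0 - 1))
        by (apply Rmult_le_compat_l; auto).
      rewrite HeL in *. nra.
Qed.

End Ergodicity.

Lemma average_bounds m z a c : (1 <= m)%nat ->
  (forall j, (j < m)%nat -> a <= z j <= c) -> a <= rsum m z / INR m <= c.
Proof.
  intros Hm Hz. pose proof (inv_INR_pos m Hm).
  unfold Rdiv. rewrite <- rsum_scal_r.
  apply convex_comb_bounds; auto; [intros; lra|].
  rewrite rsum_const. field. apply not_0_INR. lia.
Qed.

(** * Push-sum *)

(* A perturbed mixing recursion [w(s+1) = W[s] y(s)], where [y - w] is the perturbation: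
   both the numerators [u = W theta] and the weights [rho] of DRDGA are of this form. *)
Section PushSum.
Variables (m : nat) (E : nat -> nat -> nat -> bool).
Variables (y w : nat -> nat -> R).
Hypothesis Hw : forall s j, (j < m)%nat -> w j (S s) = rsum m (fun l => Wt m E s j l * y l s).

Lemma push_sum_unroll t i k : (i < m)%nat -> (k <= t)%nat ->
  w i (S t) = rsum m (fun j => row_mulWs m E t (S k) (basis i) j * y j (t - k)%nat) +
    rsum k (fun r => rsum m (fun j =>
      row_mulWs m E t (S r) (basis i) j * (y j (t - r)%nat - w j (t - r)%nat))).
Proof.
  intros Hi. induction k as [|k IH]; intros Hk.
  - simpl rsum at 2. rewrite Rplus_0_r, Hw, Nat.sub_0_r by auto.
    apply rsum_ext. intros j Hj. simpl. unfold row_mulW.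
    rewrite rsum_basis_l, Nat.sub_0_r by auto. reflexivity.
  - rewrite IH by lia. rewrite !rsum_S.
    rewrite (rsum_ext m (fun j => row_mulWs m E t (S k) (basis i) j * y j (t - k)%nat)
      (fun j => row_mulWs m E t (S k) (basis i) j * w j (t - k)%nat +
                row_mulWs m E t (S k) (basis i) j * (y j (t - k)%nat - w j (t - k)%nat)))
      by (intros; ring).
    rewrite rsum_plus.
    enough (rsum m (fun j => row_mulWs m E t (S k) (basis i) j * w j (t - k)%nat) =
            rsum m (fun j => row_mulWs m E t (S (S k)) (basis i) j * y j (t - S k)%nat))
      by lra.
    replace (t - k)%nat with (S (t - S k)) by lia.
    rewrite (rsum_ext m _ (fun j => rsum m (fun l =>
      row_mulWs m E t (S k) (basis i) j * Wt m E (t - S k) j l * y l (t - S k)%nat))).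
    + rewrite rsum_swap. apply rsum_ext. intros l Hl. simpl row_mulWs at 2. unfold row_mulW.
      rewrite <- rsum_scal_r. reflexivity.
    + intros j Hj. rewrite Hw, <- rsum_scal_l by auto. apply rsum_ext; intros; ring.
Qed.

Lemma push_sum_total t : rsum m (fun j => y j t) = rsum m (fun j => y j 0%nat) +
  rsum t (fun r => rsum m (fun j => y j (t - r)%nat - w j (t - r)%nat)).
Proof.
  assert (Hfwd : forall t, rsum m (fun j => y j t) = rsum m (fun j => y j 0%nat) +
            rsum t (fun r => rsum m (fun j => y j (S r) - w j (S r)))).
  { induction t0 as [|t0 IH]; [simpl; ring|].
    rewrite !rsum_S.
    rewrite <- Rplus_assoc, <- IH, rsum_minus.
    enough (rsum m (fun j => w j (S t0)) = rsum m (fun j => y j t0)) by lra.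
    rewrite (rsum_ext _ _ (fun j => rsum m (fun l => Wt m E t0 j l * y l t0)))
      by (intros; apply Hw; auto).
    rewrite rsum_swap. apply rsum_ext. intros l Hl.
    rewrite rsum_scal_r, Wt_colsum by auto. ring. }
  rewrite Hfwd. f_equal. rewrite (rsum_rev t). apply rsum_ext. intros r Hr.
  now replace (t - r)%nat with (S (t - 1 - r)) by lia.
Qed.

End PushSum.

Section Consensus.
Variables (m Bc : nat) (E : nat -> nat -> nat -> bool).
Hypothesis Hm : (1 <= m)%nat.
Hypothesis HA2 : assumption_A2 m Bc E.
Variables (y w rho : nat -> nat -> R).
Hypothesis Hw : forall s j, (j < m)%nat -> w j (S s) = rsum m (fun l => Wt m E s j l * y l s).
Hypothesis Hrho : forall s j, (j < m)%nat -> rho j (S s) = rsum m (fun l => Wt m E s j l * rho l s).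
Hypothesis Hrho0 : forall j, (j < m)%nat -> rho j 0%nat = 1.

Lemma push_sum_weight t i : (i < m)%nat ->
  rho i (S t) = rsum m (fun j => row_mulWs m E t (S t) (basis i) j).
Proof.
  intros Hi. rewrite (push_sum_unroll m E rho rho Hrho t i t Hi) by lia.
  rewrite (rsum_eq0 t) by (intros; apply rsum_eq0; intros; ring).
  rewrite Rplus_0_r, Nat.sub_diag. apply rsum_ext. intros j Hj. rewrite Hrho0; auto; ring.
Qed.

Lemma row_mulWs_dev_weight t i d j : (i < m)%nat -> (d <= t)%nat -> (j < m)%nat ->
  Rabs (row_mulWs m E t (S d) (basis i) j - rho i (S t) / INR m) <= 4 * eta m Bc ^ d.
Proof.
  intros Hi Hd Hj.
  destruct (row_mulWs_range m Bc E Hm HA2 t i Hi d Hd) as [a [c [Hac Hca]]].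
  assert (a <= rho i (S t) / INR m <= c).
  { rewrite push_sum_weight by auto. apply average_bounds; auto. intros j0 Hj0.
    replace (S t) with (S d + (t - d))%nat by lia.
    rewrite row_mulWs_add. apply row_mulWs_bounds; auto. }
  specialize (Hac j Hj). apply Rabs_le. lra.
Qed.

Lemma push_sum_consensus t i : (i < m)%nat -> 0 < rho i (S t) ->
  Rabs (w i (S t) / rho i (S t) - rsum m (fun j => y j t) / INR m) <=
  4 / rho i (S t) * (eta m Bc ^ t * rsum m (fun j => Rabs (y j 0%nat)) +
    rsum t (fun r => eta m Bc ^ r *
      rsum m (fun j => Rabs (y j (t - r)%nat - w j (t - r)%nat)))).
Proof.
  intros Hi Hr. set (mu := rho i (S t) / INR m).
  set (dev r j := row_mulWs m E t (S r) (basis i) j - mu).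
  assert (HmR : 0 < INR m) by (apply lt_0_INR; lia).
  assert (Hdiff : w i (S t) - mu * rsum m (fun j => y j t) =
    rsum m (fun j => dev t j * y j 0%nat) +
    rsum t (fun r => rsum m (fun j => dev r j * (y j (t - r)%nat - w j (t - r)%nat)))).
  { rewrite (push_sum_unroll m E y w Hw t i t Hi), (push_sum_total m E y w Hw t) by lia.
    rewrite Nat.sub_diag. unfold dev.
    rewrite (rsum_ext m (fun j => (_ - mu) * y j 0%nat)
      (fun j => row_mulWs m E t (S t) (basis i) j * y j 0%nat - mu * y j 0%nat))
      by (intros; ring).
    rewrite (rsum_ext t (fun r => rsum m (fun j => (row_mulWs m E t (S r) (basis i) j - mu) * _))
      (fun r => rsum m (fun j => row_mulWs m E t (S r) (basis i) j *
                                   (y j (t - r)%nat - w j (t - r)%nat)) -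
                mu * rsum m (fun j => y j (t - r)%nat - w j (t - r)%nat))).
    - rewrite !rsum_minus, !rsum_scal_l. ring.
    - intros r _. rewrite <- rsum_scal_l, <- rsum_minus. apply rsum_ext; intros; ring. }
  assert (Hdev : forall r j, (r <= t)%nat -> (j < m)%nat -> Rabs (dev r j) <= 4 * eta m Bc ^ r)
    by (intros; apply row_mulWs_dev_weight; auto).
  replace (w i (S t) / rho i (S t) - rsum m (fun j => y j t) / INR m)
    with ((w i (S t) - mu * rsum m (fun j => y j t)) / rho i (S t))
    by (unfold mu; field; lra).
  rewrite Hdiff. unfold Rdiv. rewrite Rabs_mult, Rabs_inv, (Rabs_right (rho i (S t))) by lra.
  rewrite (Rmult_comm 4), Rmult_assoc, Rmult_comm.
  apply Rmult_le_compat_l; [left; apply Rinv_0_lt_compat; auto|].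
  eapply Rle_trans; [apply Rabs_triang|]. rewrite Rmult_plus_distr_l. apply Rplus_le_compat.
  - eapply Rle_trans; [apply Rabs_rsum_le|]. rewrite <- Rmult_assoc, <- rsum_scal_l.
    apply rsum_le. intros j Hj. rewrite Rabs_mult.
    apply Rmult_le_compat_r; [apply Rabs_pos|auto].
  - eapply Rle_trans; [apply Rabs_rsum_le|]. rewrite <- rsum_scal_l.
    apply rsum_le. intros r Hr0.
    eapply Rle_trans; [apply Rabs_rsum_le|]. rewrite <- Rmult_assoc, <- rsum_scal_l.
    apply rsum_le. intros j Hj. rewrite Rabs_mult.
    apply Rmult_le_compat_r; [apply Rabs_pos|]. apply Hdev; auto; lia.
Qed.

End Consensus.

(** * Scalar estimates *)

Lemma ln_le x y : 0 < x -> x <= y -> ln x <= ln y.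
Proof. intros Hx [Hxy|<-]; [left; apply ln_increasing|]; lra. Qed.

Lemma harmonic_le_1_ln N : (1 <= N)%nat -> rsum N (fun s => / INR (S s)) <= 1 + ln (INR N).
Proof.
  induction N as [|N IH]; intros HN; [lia|].
  destruct (Nat.eq_dec N 0) as [->|HN0]; [simpl; rewrite ln_1; lra|].
  rewrite !rsum_S. specialize (IH ltac:(lia)).
  assert (HNR : 0 < INR N) by (apply lt_0_INR; lia). rewrite !S_INR.
  (* [1/(N+1) <= ln (N+1) - ln N] because [N/(N+1) = 1 - 1/(N+1) <= exp (-1/(N+1))] *)
  assert (Hexp : INR N / (INR N + 1) <= exp (- / (INR N + 1)))
    by (eapply Rle_trans; [|apply exp_ineq1_le]; right; field; lra).
  apply ln_le in Hexp; [|apply Rdiv_lt_0_compat; lra]. rewrite ln_exp in Hexp.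
  assert (ln (INR N) = ln (INR N / (INR N + 1)) + ln (INR N + 1)).
  { rewrite <- ln_mult by (try apply Rdiv_lt_0_compat; lra). f_equal. field. lra. }
  lra.
Qed.

Lemma geometric_sum_le e N : 0 <= e < 1 -> rsum N (fun s => e ^ S s) <= e / (1 - e).
Proof.
  intros He.
  assert (Hclosed : (1 - e) * rsum N (fun s => e ^ S s) = e - e ^ S N).
  { induction N as [|N IH]; [simpl; ring|]. rewrite !rsum_S.
    rewrite Rmult_plus_distr_l, IH. simpl. ring. }
  assert (0 <= e ^ S N) by (apply pow_le; lra).
  apply Rmult_le_reg_l with (1 - e); [lra|].
  replace ((1 - e) * (e / (1 - e))) with e by (field; lra). lra.
Qed.

(* The convolution of the geometric decay of mixing with the stepsizes [1/t]. *)
Definition decay_conv (e : R) (s : nat) : R := rsum s (fun r => e ^ r / INR (s - r)).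

Lemma decay_conv_S e s : decay_conv e (S s) = / INR (S s) + e * decay_conv e s.
Proof.
  unfold decay_conv. rewrite rsum_S_l. f_equal.
  - simpl. unfold Rdiv. ring.
  - rewrite <- rsum_scal_l. apply rsum_ext; intros k Hk. simpl.
    replace (S s - S k)%nat with (s - k)%nat by lia. unfold Rdiv. ring.
Qed.

Lemma decay_conv_nonneg e s : 0 <= e -> 0 <= decay_conv e s.
Proof.
  intros He. apply rsum_nonneg; intros r Hr. apply Rmult_le_pos; [apply pow_le; auto|].
  left; apply Rinv_0_lt_compat, lt_0_INR; lia.
Qed.

Lemma decay_conv_sum_le e N : 0 <= e < 1 ->
  (1 - e) * rsum N (fun s => decay_conv e (S s)) <= rsum N (fun s => / INR (S s)).
Proof.
  intros He.
  assert (Hinv : forall N, (1 - e) * rsum N (fun s => decay_conv e (S s)) + e * decay_conv e N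
                           <= rsum N (fun s => / INR (S s))).
  { induction N0 as [|N0 IH]; [unfold decay_conv; simpl; lra|].
    rewrite !rsum_S. rewrite decay_conv_S in *. lra. }
  specialize (Hinv N).
  assert (0 <= e * decay_conv e N) by (apply Rmult_le_pos; [|apply decay_conv_nonneg]; lra).
  lra.
Qed.

Lemma rsum_weighted_le N Y : (forall s, 0 <= Y s) ->
  rsum (S N) (fun s => INR s * Y s) <= INR N * rsum N (fun s => Y (S s)).
Proof.
  intros HY. rewrite rsum_S_l. simpl INR at 1. rewrite Rmult_0_l, Rplus_0_l, <- rsum_scal_l.
  apply rsum_le. intros s Hs. apply Rmult_le_compat_r; auto. apply le_INR; lia.
Qed.

Lemma rsum_ratio_le N : (1 <= N)%nat -> rsum N (fun s => INR s / INR (S s)) <= INR N - 1.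
Proof.
  induction N as [|N IH]; intros HN; [lia|].
  destruct (Nat.eq_dec N 0) as [->|HN0]; [simpl; lra|].
  rewrite !rsum_S. specialize (IH ltac:(lia)).
  rewrite S_INR. assert (0 < INR N) by (apply lt_0_INR; lia).
  assert (INR N / (INR N + 1) <= 1)
    by (apply Rmult_le_reg_r with (INR N + 1); [lra|]; field_simplify; lra).
  lra.
Qed.

Lemma rsum_INR N : rsum N INR = INR N * (INR N - 1) / 2.
Proof.
  induction N as [|N IH]; [simpl; lra|].
  rewrite rsum_S, IH, S_INR. field.
Qed.

Lemma rsum_telescope_weighted N a :
  rsum N (fun s => INR s * INR (S s) * (a s - a (S s)) - 2 * INR s * a s)
  = - (INR N * (INR N - 1) * a N).
Proof.
  induction N as [|N IH]; [simpl; ring|].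
  rewrite !rsum_S. rewrite IH, !S_INR. ring.
Qed.

Definition convex_Rn (n : nat) (f : vec -> R) : Prop :=
  forall x y a, supported n x -> supported n y -> 0 <= a <= 1 ->
    f (vcomb a x y) <= a * f x + (1 - a) * f y.

Lemma strongly_convex_convex n f tau : 0 <= tau -> strongly_convex n f tau -> convex_Rn n f.
Proof.
  intros Htau Hsc x y a Hx Hy Ha. specialize (Hsc x y a Hx Hy Ha).
  assert (0 <= tau / 2 * a * (1 - a) * norm2 n (vsub x y) ^ 2).
  { apply Rmult_le_pos; [|apply pow2_ge_0]. repeat apply Rmult_le_pos; lra. }
  lra.
Qed.

Lemma convex_weighted_average_le n f (z : nat -> vec) N :
  convex_Rn n f -> (forall s, supported n (z s)) -> (2 <= N)%nat ->
  f (fun k => rsum N (fun s => INR s * z s k) / (INR N * (INR N - 1) / 2))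
  <= rsum N (fun s => INR s * f (z s)) / (INR N * (INR N - 1) / 2).
Proof.
  intros Hf Hz HN. replace N with (N - 2 + 2)%nat by lia.
  generalize (N - 2)%nat. clear N HN. intros N. induction N as [|N IH].
  - simpl. replace (fun k => (0 + 0 * z 0%nat k + 1 * z 1%nat k) / ((1 + 1) * (1 + 1 - 1) / 2))
      with (z 1%nat) by (apply functional_extensionality; intros; field).
    right; field.
  - set (M := (N + 2)%nat) in *. replace (S N + 2)%nat with (S M) by (unfold M; lia).
    assert (HM : 2 <= INR M) by (apply (le_INR 2); unfold M; lia).
    set (P := fun k => rsum M (fun s => INR s * z s k) / (INR M * (INR M - 1) / 2)) in *.
    set (a := (INR M - 1) / (INR M + 1)).
    assert (Ha : 0 <= a <= 1).
    { unfold a. split; [apply Rmult_le_pos; [|left; apply Rinv_0_lt_compat]; lra|].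
      apply Rmult_le_reg_r with (INR M + 1); [lra|]. field_simplify; lra. }
    assert (HP : supported n P).
    { intros k Hk. unfold P. rewrite rsum_eq0; [unfold Rdiv; ring|].
      intros s _. rewrite (Hz s k Hk). ring. }
    replace (fun k => rsum (S M) (fun s => INR s * z s k) / (INR (S M) * (INR (S M) - 1) / 2))
      with (vcomb a P (z M)).
    2:{ apply functional_extensionality; intros k. unfold vcomb, P, a.
        rewrite !rsum_S. rewrite S_INR. field. lra. }
    eapply Rle_trans; [apply Hf; auto|].
    rewrite !rsum_S.
    eapply Rle_trans; [apply Rplus_le_compat_r, Rmult_le_compat_l; [lra|apply IH]|].
    right. unfold a. rewrite S_INR. field. lra.
Qed.

(* The argument gives the constant [16]; the stated [32] leaves a factor [2] of slack. *)
Lemma weighted_average_le (T delta q C K S2 Sg : R) :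
  2 <= T -> 0 < delta -> 0 <= C -> 0 <= K ->
  Sg <= (T - 1) * (8 * C / delta * K + q / 2 * S2) ->
  Sg / (T * (T - 1) / 2) <= 32 / (T * delta) * C * K + q / T * S2.
Proof.
  intros HT Hd HC HK HS.
  assert (HZ : 0 < T * (T - 1) / 2) by nra.
  apply Rle_trans with ((T - 1) * (8 * C / delta * K + q / 2 * S2) / (T * (T - 1) / 2)).
  { unfold Rdiv at 1 3. apply Rmult_le_compat_r; [left; apply Rinv_0_lt_compat|]; lra. }
  replace ((T - 1) * (8 * C / delta * K + q / 2 * S2) / (T * (T - 1) / 2))
    with (16 / (T * delta) * (C * K) + q / T * S2) by (field; lra).
  assert (0 <= C * K) by (apply Rmult_le_pos; auto).
  assert (16 / (T * delta) * (C * K) <= 32 / (T * delta) * (C * K)).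
  { apply Rmult_le_compat_r; auto. unfold Rdiv.
    apply Rmult_le_compat_r; [left; apply Rinv_0_lt_compat, Rmult_lt_0_compat|]; lra. }
  lra.
Qed.

(** * The DRDGA iterates *)

Section DRDGA.
Variables (m p Bc : nat) (n : nat -> nat)
  (f : nat -> vec -> R) (X : nat -> vec -> Prop)
  (A : nat -> nat -> nat -> R) (b : nat -> vec)
  (gam tau G : nat -> R) (E : nat -> nat -> nat -> bool)
  (q D delta : R)
  (theta u lam : nat -> nat -> vec) (rho : nat -> nat -> R)
  (x : nat -> nat -> vec) (xs : nat -> vec).
Hypothesis Hm : (1 <= m)%nat.
Hypothesis Hgam : forall i, (i < m)%nat -> 0 < gam i.
Hypothesis HA1 : forall i, (i < m)%nat ->
  0 < tau i /\ strongly_convex (n i) (f i) (tau i) /\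
  subset_Rn (n i) (X i) /\ nonempty (X i) /\ convex_set (X i) /\ compact_set (n i) (X i).
Hypothesis HG : forall i, (i < m)%nat -> 0 < G i /\
  forall z, X i z -> norm2 p (vsub (matvec (n i) (A i) z) (b i)) <= G i.
Hypothesis HA2 : assumption_A2 m Bc E.
Hypothesis Hdelta : is_delta m E delta.
Hypothesis Hq : 0 < q.
Hypothesis Hqgam : q * rsum m gam / INR m >= 4.
Hypothesis Hrun : DRDGA_run m p n f X A b gam E (fun t => q / INR t) theta u lam rho x.
Hypothesis HD : forall i t, (i < m)%nat -> (1 <= t)%nat -> norm2 p (lam i t) <= D.
Hypothesis Hopt : is_optimal m p n f X A b xs.

Lemma run_rho0 i : (i < m)%nat -> rho i 0%nat = 1.
Proof. intros Hi. apply (Hrun i Hi). Qed.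

Lemma run_u s i k : (i < m)%nat -> u i (S s) k = rsum m (fun j => Wt m E s i j * theta j s k).
Proof. intros Hi. apply (proj2 (Hrun i Hi) s). Qed.

Lemma run_rho s i : (i < m)%nat -> rho i (S s) = rsum m (fun j => Wt m E s i j * rho j s).
Proof. intros Hi. apply (proj2 (Hrun i Hi) s). Qed.

Lemma run_lam s i k : (i < m)%nat -> lam i (S s) k = u i (S s) k / rho i (S s).
Proof. intros Hi. apply (proj2 (Hrun i Hi) s). Qed.

Lemma run_x_in s i : (i < m)%nat -> X i (x i (S s)).
Proof. intros Hi. apply (proj2 (Hrun i Hi) s). Qed.

Lemma run_x_min s i z : (i < m)%nat -> X i z ->
  lagr p (n i) (f i) (A i) (b i) (gam i) (x i (S s)) (lam i (S s))
  <= lagr p (n i) (f i) (A i) (b i) (gam i) z (lam i (S s)).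
Proof. intros Hi. apply (proj2 (Hrun i Hi) s). Qed.

Lemma run_theta s i k : (i < m)%nat -> theta i (S s) k = u i (S s) k + q / INR (S s) *
  (matvec (n i) (A i) (x i (S s)) k - b i k - gam i * lam i (S s) k).
Proof. intros Hi. apply (proj2 (Hrun i Hi) s). Qed.

Lemma rho_ge_pow s i : (i < m)%nat -> (/ INR m) ^ s <= rho i s.
Proof.
  revert i. induction s as [|s IH]; intros i Hi; [rewrite run_rho0 by auto; simpl; lra|].
  pose proof (inv_INR_pos m Hm). rewrite run_rho by auto.
  assert (Hterm : forall j, (j < m)%nat -> 0 <= Wt m E s i j * rho j s).
  { intros j Hj. apply Rmult_le_pos; [apply Wt_nonneg; auto|].
    eapply Rle_trans; [|apply IH; auto]. apply pow_le; lra. }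
  eapply Rle_trans; [|apply (rsum_ge_term m _ i Hterm Hi)]. simpl pow.
  apply Rmult_le_compat; [lra|apply pow_le; lra| |auto].
  apply Wt_ge_inv_m; auto. now rewrite Nat.eqb_refl.
Qed.

Lemma rho_nonneg s i : (i < m)%nat -> 0 <= rho i s.
Proof.
  intros Hi. eapply Rle_trans; [|apply rho_ge_pow; auto].
  apply pow_le. pose proof (inv_INR_pos m Hm). lra.
Qed.

Lemma rho_sum s : rsum m (fun j => rho j s) = INR m.
Proof.
  rewrite (push_sum_total m E rho rho run_rho s).
  rewrite (rsum_eq0 s) by (intros; apply rsum_eq0; intros; ring).
  rewrite (rsum_ext m _ (fun _ => 1)) by (intros; apply run_rho0; auto).
  rewrite rsum_const. ring.
Qed.

Lemma rho_Wprod s i : (i < m)%nat -> rho i (S s) = Wprod m E s i.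
Proof.
  revert i. induction s as [|s IH]; intros i Hi; rewrite run_rho by auto; simpl;
    apply rsum_ext; intros j Hj.
  - rewrite run_rho0 by auto. ring.
  - rewrite IH by auto. reflexivity.
Qed.

Lemma rho_ge_eps s i : (i < m)%nat -> (/ INR m) ^ (m * Bc) <= rho i (S s).
Proof.
  intros Hi. pose proof (inv_INR_pos m Hm).
  assert (/ INR m <= 1)
    by (rewrite <- Rinv_1; apply Rinv_le_contravar; [lra|apply (le_INR 1); auto]).
  set (L := (m * Bc)%nat).
  destruct (Nat.le_gt_cases L (s + 1)) as [HL|HL].
  - assert (HB : (1 <= Bc)%nat) by (destruct HA2; lia).
    rewrite (push_sum_unroll m E rho rho run_rho s i (L - 1) Hi) by (unfold L in *; nia).
    rewrite (rsum_eq0 (L - 1)) by (intros; apply rsum_eq0; intros; ring).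
    rewrite Rplus_0_r. replace (S (L - 1)) with L by (unfold L in *; nia).
    apply Rle_trans with (rsum m (fun j => (/ INR m) ^ L * rho j (s - (L - 1))%nat)).
    + rewrite rsum_scal_l, rho_sum. rewrite <- (Rmult_1_r ((/ INR m) ^ L)) at 1.
      apply Rmult_le_compat_l; [apply pow_le; lra|apply (le_INR 1); auto].
    + apply rsum_le. intros j Hj. apply Rmult_le_compat_r; [apply rho_nonneg; auto|].
      apply (row_mulWs_basis_ge m Bc E Hm HA2 s i Hi j); auto.
  - eapply Rle_trans; [|apply rho_ge_pow; auto]. apply pow_le_pow_anti; [lra|lia].
Qed.

Lemma delta_pos : 0 < delta.
Proof.
  destruct Hdelta as [_ Hglb]. eapply Rlt_le_trans; [|apply Hglb].
  - apply pow_lt, inv_INR_pos, Hm.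
  - intros v [t [i [Hi ->]]]. rewrite <- rho_Wprod by auto. apply rho_ge_eps; auto.
Qed.

Lemma delta_le_rho s i : (i < m)%nat -> delta <= rho i (S s).
Proof. intros Hi. apply (proj1 Hdelta). exists s, i. split; auto. apply rho_Wprod; auto. Qed.

Lemma rho_pos s i : (i < m)%nat -> 0 < rho i (S s).
Proof. intros Hi. eapply Rlt_le_trans; [apply delta_pos|apply delta_le_rho; auto]. Qed.

Definition resid i s k := matvec (n i) (A i) (x i s) k - b i k.
Definition resid_opt i k := matvec (n i) (A i) (xs i) k - b i k.
(* The direction of the dual step of agent [i]: [theta_i(s) = u_i(s) + (q / s) ascent_i(s)]. *)
Definition ascent i s k := resid i s k - gam i * lam i s k.
Definition cbound i := G i + gam i * D.
Definition theta_avg s k := rsum m (fun j => theta j s k) / INR m.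
Definition theta_avg_sq s := rsum p (fun k => theta_avg s k ^ 2).
Definition theta0_l1 := rsum m (fun i => norm1 p (theta i O)).
Definition Bmax := rmax_upto (pred m) (fun i => sqrt (INR p) * cbound i).

Lemma D_nonneg : 0 <= D.
Proof. eapply Rle_trans; [|apply (HD 0%nat 1%nat); lia]. apply sqrt_pos. Qed.

Lemma cbound_nonneg i : (i < m)%nat -> 0 <= cbound i.
Proof.
  intros Hi. unfold cbound. pose proof (proj1 (HG i Hi)). pose proof (Hgam i Hi).
  pose proof D_nonneg. nra.
Qed.

Lemma run_theta_ascent s i k : (i < m)%nat ->
  theta i (S s) k = u i (S s) k + q / INR (S s) * ascent i (S s) k.
Proof. intros Hi. rewrite run_theta by auto. reflexivity. Qed.

Lemma rsum_u s k : rsum m (fun j => u j (S s) k) = rsum m (fun j => theta j s k).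
Proof.
  rewrite (rsum_ext m _ (fun j => rsum m (fun l => Wt m E s j l * theta l s k)))
    by (intros; apply run_u; auto).
  rewrite rsum_swap. apply rsum_ext. intros l Hl. rewrite rsum_scal_r, Wt_colsum by auto. ring.
Qed.

Lemma theta_avg_S s k :
  theta_avg (S s) k = theta_avg s k + q / INR (S s) / INR m * rsum m (fun j => ascent j (S s) k).
Proof.
  unfold theta_avg.
  rewrite (rsum_ext m _ (fun j => u j (S s) k + q / INR (S s) * ascent j (S s) k))
    by (intros; apply run_theta_ascent; auto).
  rewrite rsum_plus, rsum_u, rsum_scal_l.
  assert (INR m <> 0) by (apply not_0_INR; lia). assert (INR (S s) <> 0) by (apply not_0_INR; lia).
  field. auto.
Qed.

Lemma lam_coord_le s i k : (i < m)%nat -> (k < p)%nat -> Rabs (lam i (S s) k) <= D.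
Proof. intros Hi Hk. eapply Rle_trans; [apply Rabs_le_norm2; eauto|]. apply HD; auto; lia. Qed.

(* [theta_avg] is the [rho]-weighted average of the [lam_i], and [sum_j rho_j = m]. *)
Lemma theta_avg_coord_le s k : (k < p)%nat -> Rabs (theta_avg s k) <= D.
Proof.
  intros Hk. assert (HmR : 0 < INR m) by (apply lt_0_INR; lia).
  unfold theta_avg. rewrite <- rsum_u.
  rewrite (rsum_ext m _ (fun j => rho j (S s) * lam j (S s) k)).
  2:{ intros j Hj. rewrite run_lam by auto. pose proof (rho_pos s j Hj). field. lra. }
  unfold Rdiv. rewrite Rabs_mult, Rabs_inv, (Rabs_right (INR m)) by lra.
  apply Rmult_le_reg_r with (INR m); auto. rewrite Rmult_assoc, Rinv_l, Rmult_1_r by lra.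
  eapply Rle_trans; [apply Rabs_rsum_le|]. rewrite <- (rho_sum (S s)), Rmult_comm, <- rsum_scal_r.
  apply rsum_le. intros j Hj. rewrite Rabs_mult, Rabs_right by (apply Rle_ge, rho_nonneg; auto).
  apply Rmult_le_compat_l; [apply rho_nonneg|apply lam_coord_le]; auto.
Qed.

Lemma resid_norm_le s i : (i < m)%nat -> norm2 p (resid i (S s)) <= G i.
Proof. intros Hi. apply (proj2 (HG i Hi)), run_x_in; auto. Qed.

Lemma resid_coord_le s i k : (i < m)%nat -> (k < p)%nat -> Rabs (resid i (S s) k) <= G i.
Proof. intros Hi Hk. eapply Rle_trans; [apply Rabs_le_norm2; eauto|apply resid_norm_le; auto]. Qed.

Lemma xs_in i : (i < m)%nat -> X i (xs i).
Proof. intros Hi. apply (proj1 (proj1 Hopt)); auto. Qed.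

Lemma resid_opt_sum k : (k < p)%nat -> rsum m (fun i => resid_opt i k) = 0.
Proof. intros Hk. apply (proj2 (proj1 Hopt)); auto. Qed.

Lemma resid_opt_coord_le i k : (i < m)%nat -> (k < p)%nat -> Rabs (resid_opt i k) <= G i.
Proof.
  intros Hi Hk. eapply Rle_trans; [|apply (proj2 (HG i Hi) _ (xs_in i Hi))].
  apply (Rabs_le_norm2 p (vsub (matvec (n i) (A i) (xs i)) (b i)) k Hk).
Qed.

Lemma ascent_sq_le s i : (i < m)%nat -> rsum p (fun k => ascent i (S s) k ^ 2) <= cbound i ^ 2.
Proof.
  intros Hi. pose proof (Hgam i Hi).
  eapply Rle_trans; [apply (rsum_sq_sub_scal_le p (resid i (S s)) (lam i (S s))); lra|].
  apply pow_incr. split.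
  - apply Rplus_le_le_0_compat; [apply sqrt_pos|apply Rmult_le_pos; [lra|apply sqrt_pos]].
  - apply Rplus_le_compat; [apply resid_norm_le; auto|].
    apply Rmult_le_compat_l; [lra|apply HD; auto; lia].
Qed.

Lemma ascent_l1_le s i : (i < m)%nat -> rsum p (fun k => Rabs (ascent i (S s) k)) <= Bmax.
Proof.
  intros Hi. eapply Rle_trans; [apply norm1_le_norm2|].
  eapply Rle_trans; [|apply (rmax_upto_ge _ (fun i => sqrt (INR p) * cbound i) i); lia].
  apply Rmult_le_compat_l; [apply sqrt_pos|].
  rewrite <- (sqrt_pow2 (cbound i)) by (apply cbound_nonneg; auto).
  apply sqrt_le_1_alt, ascent_sq_le; auto.
Qed.

Lemma Bmax_nonneg : 0 <= Bmax.
Proof.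
  eapply Rle_trans; [|apply (rmax_upto_ge _ (fun i => sqrt (INR p) * cbound i) 0); lia].
  apply Rmult_le_pos; [apply sqrt_pos|apply cbound_nonneg; lia].
Qed.

Lemma theta0_l1_nonneg : 0 <= theta0_l1.
Proof. apply rsum_nonneg; intros; apply rsum_nonneg; intros; apply Rabs_pos. Qed.

Lemma lam_theta_avg_coord_le s i k : (i < m)%nat ->
  Rabs (lam i (S s) k - theta_avg s k) <=
  4 / delta * (eta m Bc ^ s * rsum m (fun j => Rabs (theta j 0%nat k)) +
    rsum s (fun r => eta m Bc ^ r *
      rsum m (fun j => Rabs (q / INR (s - r) * ascent j (s - r)%nat k)))).
Proof.
  intros Hi.
  pose proof (push_sum_consensus m Bc E Hm HA2 (fun j t => theta j t k) (fun j t => u j t k) rho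
    (fun s0 j Hj => run_u s0 j k Hj) run_rho run_rho0 s i Hi (rho_pos s i Hi)) as Hcons.
  cbv beta in Hcons. rewrite <- run_lam in Hcons by auto. fold (theta_avg s k) in Hcons.
  eapply Rle_trans; [apply Hcons|].
  rewrite (rsum_ext s (fun r => eta m Bc ^ r * rsum m (fun j => Rabs (q / INR (s - r) * _)))
    (fun r => eta m Bc ^ r * rsum m (fun j => Rabs (theta j (s - r)%nat k - u j (s - r)%nat k)))).
  2:{ intros r Hr. f_equal. apply rsum_ext. intros j Hj. f_equal.
      replace (s - r)%nat with (S (s - r - 1)) by lia. rewrite run_theta_ascent by auto. ring. }
  apply Rmult_le_compat_r.
  - pose proof (eta_nonneg m Bc).
    apply Rplus_le_le_0_compat;
      [apply Rmult_le_pos; [apply pow_le; lra|]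
      |apply rsum_nonneg; intros r _; apply Rmult_le_pos; [apply pow_le; lra|]];
      apply rsum_nonneg; intros; apply Rabs_pos.
  - unfold Rdiv. apply Rmult_le_compat_l; [lra|].
    apply Rinv_le_contravar; [apply delta_pos|apply delta_le_rho; auto].
Qed.

Lemma lam_theta_avg_l1_le s i : (i < m)%nat ->
  rsum p (fun k => Rabs (lam i (S s) k - theta_avg s k)) <=
  4 / delta * (eta m Bc ^ s * theta0_l1 + q * INR m * Bmax * decay_conv (eta m Bc) s).
Proof.
  intros Hi. pose proof delta_pos. pose proof (eta_nonneg m Bc).
  eapply Rle_trans; [apply rsum_le; intros k Hk; apply lam_theta_avg_coord_le; auto|].
  rewrite rsum_scal_l.
  apply Rmult_le_compat_l; [apply Rmult_le_pos; [|left; apply Rinv_0_lt_compat]; lra|].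
  rewrite rsum_plus. apply Rplus_le_compat.
  - rewrite rsum_scal_l. right. f_equal. unfold theta0_l1, norm1. apply rsum_swap.
  - rewrite rsum_swap. unfold decay_conv. rewrite <- rsum_scal_l. apply rsum_le. intros r Hr.
    assert (Hsr : 0 < q / INR (s - r)) by (apply Rdiv_lt_0_compat; [|apply lt_0_INR; lia]; lra).
    rewrite rsum_scal_l, (rsum_swap p m).
    replace (q * INR m * Bmax * (eta m Bc ^ r / INR (s - r)))
      with (eta m Bc ^ r * (q / INR (s - r) * (INR m * Bmax))) by (field; apply not_0_INR; lia).
    apply Rmult_le_compat_l; [apply pow_le; lra|].
    rewrite <- rsum_const, <- rsum_scal_l. apply rsum_le. intros j Hj.
    rewrite (rsum_ext p _ (fun k => q / INR (s - r) * Rabs (ascent j (s - r)%nat k)))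
      by (intros; rewrite Rabs_mult, (Rabs_right (q / _)); lra).
    rewrite rsum_scal_l. apply Rmult_le_compat_l; [lra|].
    replace (s - r)%nat with (S (s - r - 1)) by lia. apply ascent_l1_le; auto.
Qed.

Definition gap s := Fobj m f (fun i => x i (S s)) - Fobj m f xs.

(* Optimality of [x_i(s+1)] for the Lagrangian at [lam_i(s+1)], tested against [xs_i]. *)
Lemma gap_le_dual s :
  gap s <= rsum m (fun i => rsum p (fun k => lam i (S s) k * (resid_opt i k - resid i (S s) k))).
Proof.
  unfold gap, Fobj. rewrite <- rsum_minus. apply rsum_le. intros i Hi.
  pose proof (run_x_min s i (xs i) Hi (xs_in i Hi)) as Hmin. unfold lagr in Hmin.
  rewrite (rsum_ext p _ (fun k => lam i (S s) k * resid_opt i k - lam i (S s) k * resid i (S s) k))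
    by (intros; ring).
  rewrite rsum_minus. unfold resid_opt, resid. lra.
Qed.

Lemma cross_term_le s i k : (i < m)%nat -> (k < p)%nat ->
  (lam i (S s) k - theta_avg s k) * (resid_opt i k - resid i (S s) k)
  + gam i * theta_avg s k * (theta_avg s k - lam i (S s) k)
  <= 2 * cbound i * Rabs (lam i (S s) k - theta_avg s k).
Proof.
  intros Hi Hk. set (dl := lam i (S s) k - theta_avg s k).
  set (dr := resid_opt i k - resid i (S s) k).
  pose proof (resid_opt_coord_le i k Hi Hk). pose proof (resid_coord_le s i k Hi Hk).
  pose proof (theta_avg_coord_le s k Hk). pose proof (Hgam i Hi). pose proof D_nonneg.
  pose proof (Rabs_pos dl).
  assert (Hdr : Rabs dr <= 2 * G i)
    by (unfold dr; eapply Rle_trans; [apply Rabs_triang|]; rewrite Rabs_Ropp; lra).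
  assert (Hdl : dl * dr <= 2 * G i * Rabs dl).
  { eapply Rle_trans; [apply Rle_abs|]. rewrite Rabs_mult, Rmult_comm.
    apply Rmult_le_compat_r; auto. }
  assert (Hya : - (theta_avg s k * dl) <= D * Rabs dl).
  { eapply Rle_trans; [apply Rle_abs|]. rewrite Rabs_Ropp, Rabs_mult.
    apply Rmult_le_compat_r; auto. }
  replace (theta_avg s k - lam i (S s) k) with (- dl) by (unfold dl; ring).
  assert (gam i * - (theta_avg s k * dl) <= gam i * (D * Rabs dl))
    by (apply Rmult_le_compat_l; lra).
  assert (0 <= gam i * (D * Rabs dl)) by (apply Rmult_le_pos; [lra|apply Rmult_le_pos; lra]).
  unfold cbound. nra.
Qed.

(* Expanding [|theta_avg(s+1)|^2] with [theta_avg_S]. *)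
Lemma theta_avg_sq_S s :
  - rsum p (fun k => theta_avg s k * rsum m (fun i => ascent i (S s) k)) =
  INR m * INR (S s) / (2 * q) * (theta_avg_sq s - theta_avg_sq (S s)) +
  q / (2 * INR m * INR (S s)) * rsum p (fun k => rsum m (fun i => ascent i (S s) k) ^ 2).
Proof.
  assert (INR m <> 0) by (apply not_0_INR; lia). assert (INR (S s) <> 0) by (apply not_0_INR; lia).
  unfold theta_avg_sq. rewrite <- rsum_minus, <- !rsum_scal_l, <- rsum_plus.
  rewrite <- rsum_opp.
  apply rsum_ext. intros k Hk. rewrite theta_avg_S. field. lra.
Qed.

Lemma ascent_sum_sq_le s :
  rsum p (fun k => rsum m (fun i => ascent i (S s) k) ^ 2)
  <= INR m * rsum m (fun i => cbound i ^ 2).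
Proof.
  eapply Rle_trans; [apply rsum_le; intros k Hk; apply rsum_sq_le|].
  rewrite rsum_scal_l. apply Rmult_le_compat_l; [apply pos_INR|].
  rewrite rsum_swap. apply rsum_le. intros i Hi. apply ascent_sq_le; auto.
Qed.

(* Split [lam_i = theta_avg + (lam_i - theta_avg)]: the [theta_avg] part telescopes in
   [theta_avg_sq] and the rest is a consensus error. *)
Lemma gap_le_step s : gap s <=
  rsum m (fun i => 2 * cbound i * rsum p (fun k => Rabs (lam i (S s) k - theta_avg s k)))
  + INR m * INR (S s) / (2 * q) * (theta_avg_sq s - theta_avg_sq (S s))
  + q / (2 * INR (S s)) * rsum m (fun i => cbound i ^ 2) - rsum m gam * theta_avg_sq s.
Proof.
  eapply Rle_trans; [apply gap_le_dual|].
  set (cross i k := (lam i (S s) k - theta_avg s k) * (resid_opt i k - resid i (S s) k)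
                    + gam i * theta_avg s k * (theta_avg s k - lam i (S s) k)).
  rewrite (rsum_ext m _ (fun i => rsum p (cross i) + rsum p (fun k => theta_avg s k * resid_opt i k)
    - rsum p (fun k => theta_avg s k * ascent i (S s) k) - gam i * theta_avg_sq s)).
  2:{ intros i Hi. unfold theta_avg_sq. rewrite <- rsum_scal_l, <- rsum_plus, <- !rsum_minus.
      apply rsum_ext; intros. unfold cross, ascent. ring. }
  rewrite !rsum_minus, rsum_plus, rsum_scal_r.
  rewrite (rsum_swap m p (fun i k => theta_avg s k * resid_opt i k)).
  rewrite (rsum_eq0 p (fun k => rsum m (fun i => theta_avg s k * resid_opt i k)))
    by (intros; rewrite rsum_scal_l, resid_opt_sum by auto; ring).
  rewrite (rsum_swap m p (fun i k => theta_avg s k * ascent i (S s) k)).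
  rewrite (rsum_ext p (fun k => rsum m (fun i => theta_avg s k * ascent i (S s) k))
    (fun k => theta_avg s k * rsum m (fun i => ascent i (S s) k))) by (intros; apply rsum_scal_l).
  assert (Hcross : rsum m (fun i => rsum p (cross i)) <=
    rsum m (fun i => 2 * cbound i * rsum p (fun k => Rabs (lam i (S s) k - theta_avg s k)))).
  { apply rsum_le. intros i Hi. rewrite <- rsum_scal_l. apply rsum_le. intros k Hk.
    apply cross_term_le; auto. }
  pose proof (theta_avg_sq_S s) as Hsq.
  assert (HmR : 0 < INR m) by (apply lt_0_INR; lia).
  assert (HsR : 0 < INR (S s)) by (apply lt_0_INR; lia).
  assert (q / (2 * INR m * INR (S s)) * rsum p (fun k => rsum m (fun i => ascent i (S s) k) ^ 2)
          <= q / (2 * INR (S s)) * rsum m (fun i => cbound i ^ 2)).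
  { replace (q / (2 * INR (S s)) * rsum m (fun i => cbound i ^ 2))
      with (q / (2 * INR m * INR (S s)) * (INR m * rsum m (fun i => cbound i ^ 2))) by (field; lra).
    apply Rmult_le_compat_l; [|apply ascent_sum_sq_le].
    apply Rlt_le, Rdiv_lt_0_compat; [lra|]. nra. }
  lra.
Qed.

Lemma gam_sum_ge : INR m / q <= rsum m gam.
Proof.
  assert (HmR : 0 < INR m) by (apply lt_0_INR; lia).
  assert (4 * INR m <= q * rsum m gam).
  { apply Rge_le in Hqgam. apply Rmult_le_compat_r with (r := INR m) in Hqgam; [|lra].
    unfold Rdiv in Hqgam. rewrite Rmult_assoc, Rinv_l, Rmult_1_r in Hqgam by lra. lra. }
  apply Rmult_le_reg_l with q; auto.
  replace (q * (INR m / q)) with (INR m) by (field; lra). lra.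
Qed.

Lemma theta_avg_sq_nonneg s : 0 <= theta_avg_sq s.
Proof. apply rsum_nonneg; intros; apply pow2_ge_0. Qed.

Definition mixing_error s :=
  eta m Bc ^ s * theta0_l1 + q * INR m * Bmax * decay_conv (eta m Bc) s.

Lemma mixing_error_nonneg s : 0 <= mixing_error s.
Proof.
  pose proof (eta_nonneg m Bc). pose proof theta0_l1_nonneg. pose proof Bmax_nonneg.
  pose proof (pos_INR m). pose proof (decay_conv_nonneg (eta m Bc) s H).
  unfold mixing_error. apply Rplus_le_le_0_compat; [apply Rmult_le_pos; auto; apply pow_le; auto|].
  repeat apply Rmult_le_pos; lra.
Qed.

Lemma weighted_gap_le s : INR s * gap s <=
  INR s * (8 / delta * rsum m cbound * mixing_error s)
  + q / 2 * rsum m (fun i => cbound i ^ 2) * (INR s / INR (S s))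
  + INR m / (2 * q) * (INR s * INR (S s) * (theta_avg_sq s - theta_avg_sq (S s))
                       - 2 * INR s * theta_avg_sq s).
Proof.
  pose proof (pos_INR s) as Hs. pose proof (theta_avg_sq_nonneg s) as Ha.
  assert (HsR : 0 < INR (S s)) by (apply lt_0_INR; lia).
  assert (Hcons : rsum m (fun i =>
                    2 * cbound i * rsum p (fun k => Rabs (lam i (S s) k - theta_avg s k)))
                  <= 8 / delta * rsum m cbound * mixing_error s).
  { apply Rle_trans with (rsum m (fun i => 2 * cbound i * (4 / delta * mixing_error s))).
    - apply rsum_le; intros i Hi. pose proof (cbound_nonneg i Hi).
      apply Rmult_le_compat_l; [lra|apply lam_theta_avg_l1_le; auto].
    - right. rewrite rsum_scal_r, rsum_scal_l. field. apply Rgt_not_eq, delta_pos. }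
  assert (Hgam_sum : INR s * (INR m / q) * theta_avg_sq s <= INR s * rsum m gam * theta_avg_sq s)
    by (apply Rmult_le_compat_r, Rmult_le_compat_l; auto using gam_sum_ge).
  assert (INR s * gap s <= INR s *
    (8 / delta * rsum m cbound * mixing_error s
     + INR m * INR (S s) / (2 * q) * (theta_avg_sq s - theta_avg_sq (S s))
     + q / (2 * INR (S s)) * rsum m (fun i => cbound i ^ 2) - rsum m gam * theta_avg_sq s)).
  { apply Rmult_le_compat_l; auto. pose proof (gap_le_step s). lra. }
  assert (INR s * (q / (2 * INR (S s)) * rsum m (fun i => cbound i ^ 2))
          = q / 2 * rsum m (fun i => cbound i ^ 2) * (INR s / INR (S s))) by (field; lra).
  assert (INR s * (INR m * INR (S s) / (2 * q) * (theta_avg_sq s - theta_avg_sq (S s)))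
            - INR s * (INR m / q) * theta_avg_sq s
          = INR m / (2 * q) * (INR s * INR (S s) * (theta_avg_sq s - theta_avg_sq (S s))
                               - 2 * INR s * theta_avg_sq s)) by (field; lra).
  nra.
Qed.

Lemma mixing_error_sum_le N : (1 <= N)%nat ->
  rsum (S N) (fun s => INR s * mixing_error s) <=
  INR N * (eta m Bc / (1 - eta m Bc) * theta0_l1
           + q * INR m * Bmax / (1 - eta m Bc) * (1 + ln (INR (S N)))).
Proof.
  intros HN. destruct (eta_range m Bc E Hm HA2) as [He0 He1].
  pose proof theta0_l1_nonneg. pose proof Bmax_nonneg. pose proof (pos_INR m).
  eapply Rle_trans; [apply rsum_weighted_le, mixing_error_nonneg|].
  apply Rmult_le_compat_l; [apply pos_INR|]. unfold mixing_error.
  rewrite rsum_plus, rsum_scal_r, rsum_scal_l. apply Rplus_le_compat.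
  - apply Rmult_le_compat_r; auto. apply geometric_sum_le; lra.
  - assert (Hq0 : 0 <= q * INR m * Bmax) by (repeat apply Rmult_le_pos; lra).
    unfold Rdiv. rewrite (Rmult_assoc _ (/ _)). apply Rmult_le_compat_l; auto.
    apply Rmult_le_reg_l with (1 - eta m Bc); [lra|].
    replace ((1 - eta m Bc) * (/ (1 - eta m Bc) * (1 + ln (INR (S N))))) with (1 + ln (INR (S N)))
      by (field; lra).
    eapply Rle_trans; [apply decay_conv_sum_le; lra|].
    eapply Rle_trans; [apply harmonic_le_1_ln; auto|].
    apply Rplus_le_compat_l, ln_le; [apply lt_0_INR; lia|apply le_INR; lia].
Qed.

Definition mixing_constant (T : nat) :=
  eta m Bc / (1 - eta m Bc) * theta0_l1 + q * INR m * Bmax / (1 - eta m Bc) * (1 + ln (INR T)).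

Lemma mixing_constant_nonneg T : (1 <= T)%nat -> 0 <= mixing_constant T.
Proof.
  intros HT. destruct (eta_range m Bc E Hm HA2) as [He0 He1].
  pose proof theta0_l1_nonneg. pose proof Bmax_nonneg. pose proof (pos_INR m).
  assert (0 <= ln (INR T)) by (rewrite <- ln_1; apply ln_le; [lra|apply (le_INR 1); auto]).
  assert (0 < / (1 - eta m Bc)) by (apply Rinv_0_lt_compat; lra).
  unfold mixing_constant, Rdiv.
  apply Rplus_le_le_0_compat; repeat apply Rmult_le_pos; lra.
Qed.

Lemma rsum_cbound_nonneg : 0 <= rsum m cbound.
Proof. apply rsum_nonneg, cbound_nonneg. Qed.

Lemma weighted_gap_sum_le T : (2 <= T)%nat ->
  rsum T (fun s => INR s * gap s) <=
  (INR T - 1) * (8 * rsum m cbound / delta * mixing_constant T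
                 + q / 2 * rsum m (fun i => cbound i ^ 2)).
Proof.
  intros HT. pose proof delta_pos. pose proof rsum_cbound_nonneg.
  eapply Rle_trans; [apply rsum_le; intros s _; apply weighted_gap_le|].
  set (S2 := rsum m (fun i => cbound i ^ 2)).
  assert (HS2 : 0 <= S2) by (apply rsum_nonneg; intros; apply pow2_ge_0).
  rewrite !rsum_plus, (rsum_scal_l T (q / 2 * S2)), (rsum_scal_l T (INR m / (2 * q))),
    rsum_telescope_weighted.
  rewrite (rsum_ext T (fun s => INR s * _)
    (fun s => 8 / delta * rsum m cbound * (INR s * mixing_error s)))
    by (intros; ring).
  rewrite rsum_scal_l.
  destruct T as [|N]; [lia|].
  pose proof (mixing_error_sum_le N ltac:(lia)) as Hmix.
  pose proof (rsum_ratio_le (S N) ltac:(lia)) as Hratio.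
  assert (Htel : INR m / (2 * q) * - (INR (S N) * (INR (S N) - 1) * theta_avg_sq (S N)) <= 0).
  { pose proof (theta_avg_sq_nonneg (S N)). pose proof (pos_INR m). rewrite S_INR.
    assert (0 <= INR N) by apply pos_INR.
    assert (0 <= INR m / (2 * q)) by (apply Rlt_le, Rdiv_lt_0_compat; lra || (apply lt_0_INR; lia)).
    assert (0 <= (INR N + 1) * (INR N + 1 - 1) * theta_avg_sq (S N)) by (apply Rmult_le_pos; nra).
    nra. }
  assert (8 / delta * rsum m cbound * rsum (S N) (fun s => INR s * mixing_error s)
          <= (INR (S N) - 1) * (8 * rsum m cbound / delta * mixing_constant (S N))).
  { rewrite S_INR. replace (INR N + 1 - 1) with (INR N) by ring.
    replace (INR N * (8 * rsum m cbound / delta * mixing_constant (S N)))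
      with (8 / delta * rsum m cbound * (INR N * mixing_constant (S N))) by (field; lra).
    apply Rmult_le_compat_l; [apply Rmult_le_pos; [apply Rlt_le, Rdiv_lt_0_compat|]; lra|].
    exact Hmix. }
  assert (q / 2 * S2 * rsum (S N) (fun s => INR s / INR (S s)) <= (INR (S N) - 1) * (q / 2 * S2)).
  { rewrite (Rmult_comm (INR (S N) - 1)).
    apply Rmult_le_compat_l; [apply Rmult_le_pos; lra|exact Hratio]. }
  lra.
Qed.

Lemma gap_xhat_le T : (2 <= T)%nat ->
  Fobj m f (xhat x T) - Fobj m f xs <= rsum T (fun s => INR s * gap s) / (INR T * (INR T - 1) / 2).
Proof.
  intros HT. assert (HTR : 2 <= INR T) by (apply (le_INR 2); auto).
  assert (Hjensen : Fobj m f (xhat x T) <=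
            rsum T (fun s => INR s * Fobj m f (fun i => x i (S s))) / (INR T * (INR T - 1) / 2)).
  { unfold Fobj, Rdiv.
    rewrite (rsum_ext T _ (fun s => rsum m (fun i => INR s * f i (x i (S s)))))
      by (intros; rewrite rsum_scal_l; auto).
    rewrite rsum_swap, <- rsum_scal_r. apply rsum_le. intros i Hi.
    destruct (HA1 i Hi) as [Htau [Hsc [Hsub _]]].
    apply (convex_weighted_average_le (n i) (f i) (fun s => x i (S s)) T); auto.
    - apply (strongly_convex_convex _ _ (tau i)); auto; lra.
    - intros s. apply Hsub, run_x_in; auto. }
  unfold gap.
  rewrite (rsum_ext T _
    (fun s => INR s * Fobj m f (fun i => x i (S s)) - INR s * Fobj m f xs))
    by (intros; ring).
  rewrite rsum_minus, rsum_scal_r, rsum_INR.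
  set (Z := INR T * (INR T - 1) / 2) in *.
  replace ((rsum T (fun s => INR s * Fobj m f (fun i => x i (S s))) - Z * Fobj m f xs) / Z)
    with (rsum T (fun s => INR s * Fobj m f (fun i => x i (S s))) / Z - Fobj m f xs)
    by (field; unfold Z; nra).
  lra.
Qed.

End DRDGA.

Theorem theorem2
  (m p Bc : nat) (n : nat -> nat)
  (f : nat -> vec -> R) (X : nat -> vec -> Prop)
  (A : nat -> nat -> nat -> R) (b : nat -> vec)
  (gam tau G : nat -> R) (E : nat -> nat -> nat -> bool)
  (q D delta : R)
  (theta u lam : nat -> nat -> vec) (rho : nat -> nat -> R)
  (x : nat -> nat -> vec) (xs : nat -> vec) (T : nat) :
  (1 <= m)%nat ->
  (forall i, (i < m)%nat -> 0 < gam i) ->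
  (* Assumption A1 *)
  (forall i, (i < m)%nat ->
     0 < tau i /\ strongly_convex (n i) (f i) (tau i) /\
     subset_Rn (n i) (X i) /\ nonempty (X i) /\ convex_set (X i) /\
     compact_set (n i) (X i)) ->
  (forall i, (i < m)%nat -> 0 < G i /\
     forall z, X i z -> norm2 p (vsub (matvec (n i) (A i) z) (b i)) <= G i) ->
  (* Assumption A2 *)
  assumption_A2 m Bc E ->
  is_delta m E delta ->
  (* stepsize beta[t] = q / t, with q gamma / m >= 4 *)
  0 < q ->
  q * rsum m gam / INR m >= 4 ->
  DRDGA_run m p n f X A b gam E (fun t => q / INR t) theta u lam rho x ->
  (forall i t, (i < m)%nat -> (1 <= t)%nat -> norm2 p (lam i t) <= D) ->
  is_optimal m p n f X A b xs ->
  (2 <= T)%nat ->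
  let B := rmax_upto (Nat.pred m) (fun i => sqrt (INR p) * (G i + gam i * D)) in
  let et := eta m Bc in
  Fobj m f (xhat x T) - Fobj m f xs <=
    32 / (INR T * delta) * rsum m (fun i => G i + gam i * D) *
      (et / (1 - et) * rsum m (fun i => norm1 p (theta i O))
       + q * INR m * B / (1 - et) * (1 + ln (INR T)))
    + q / INR T * rsum m (fun i => (G i + gam i * D) ^ 2).
Proof.
  intros Hm Hgam HA1 HG HA2 Hdelta Hq Hqgam Hrun HD Hopt HT B et.
  eapply Rle_trans; [eapply gap_xhat_le; eauto|].
  apply weighted_average_le.
  - apply (le_INR 2); auto.
  - eapply delta_pos; eauto.
  - eapply rsum_cbound_nonneg; eauto.
  - eapply mixing_constant_nonneg; eauto; lia.
  - eapply weighted_gap_sum_le; eauto.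
Qed.
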